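(* Let $T$ be a consistent theory extending $I\Delta_0+\Omega_1$, and let $\varphi(x)$ be a formula with one free variable $x$. Then there exists a sentence $\psi$ such that $T\vdash \psi\leftrightarrow\varphi(\ulcorner\psi\urcorner_Z)$.
   Context: Fibonacci numbers: $F_1=1$, $F_2=2$, $F_n=F_{n-1}+F_{n-2}$. Cantor pairing $\langle x,y\rangle=\frac{(x+y)(x+y+1)}{2}+x$. For a finite sequence $[a_1,\dots,a_m]$ of natural numbers, $\operatorname{Seq}_Z([a_1,\dots,a_m])=\sum_{i=1}^m F_{2\langle a_i,i\rangle+1}$ (empty sequence $\mapsto 0$). Each symbol of the (arithmetical) language has a fixed positive code $\ulcorner s\urcorner$, with variables $v_i$ coded $i+k$ for a fixed offset $k$ exceeding all other symbol codes, and a formula $\chi = s_1\cdots s_m$ is coded by $\ulcorner\chi\urcorner_Z=\operatorname{Seq}_Z([\ulcorner s_1\urcorner,\dots,\ulcorner s_m\urcorner])$; in $\varphi(\ulcorner\psi\urcorner_Z)$ the code is substituted as a numeral. $I\Delta_0+\Omega_1$ is $\Delta_0$-induction plus the axiom $\Omega_1$ asserting totality of $\omega_1(x)=x^{\lfloor\log_2 x\rfloor}$. *)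

From Stdlib Require Import Arith List.
Import ListNotations.

Inductive term : Type :=
| tvar : nat -> term
| tzero : term
| tsucc : term -> term
| tplus : term -> term -> term
| ttimes : term -> term -> term.

Inductive formula : Type :=
| feq : term -> term -> formula
| fle : term -> term -> formula
| fneg : formula -> formula
| fimp : formula -> formula -> formula
| fall : nat -> formula -> formula.

Definition fex (x : nat) (f : formula) : formula := fneg (fall x (fneg f)).
Definition fand (a b : formula) : formula := fneg (fimp a (fneg b)).
Definition fiff (a b : formula) : formula := fand (fimp a b) (fimp b a).

Inductive symbol : Type :=
| SZero | SSucc | SPlus | STimes | SEq | SLe | SNeg | SImp | SAll
| SVar : nat -> symbol.

Fixpoint term_syms (t : term) : list symbol :=
  match t with
  | tvar i => [SVar i]
  | tzero => [SZero]
  | tsucc u => SSucc :: term_syms u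
  | tplus u v => SPlus :: term_syms u ++ term_syms v
  | ttimes u v => STimes :: term_syms u ++ term_syms v
  end.

Fixpoint formula_syms (f : formula) : list symbol :=
  match f with
  | feq u v => SEq :: term_syms u ++ term_syms v
  | fle u v => SLe :: term_syms u ++ term_syms v
  | fneg g => SNeg :: formula_syms g
  | fimp g h => SImp :: formula_syms g ++ formula_syms h
  | fall i g => SAll :: SVar i :: formula_syms g
  end.

Definition admissible_code (c : symbol -> nat) : Prop :=
  (forall s s', c s = c s' -> s = s') /\
  (forall s, 0 < c s) /\
  exists k, (forall i, c (SVar i) = i + k) /\
            (forall s, (forall i, s <> SVar i) -> c s < k).

(* Fibonacci numbers with F_1 = 1, F_2 = 2, F_n = F_(n-1) + F_(n-2);
   (F_0 := 1 is never used by the coding, index 2<a,i>+1 >= 1) *)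
Fixpoint fibZ (n : nat) : nat :=
  match n with
  | 0 => 1
  | S m => match m with
           | 0 => 1
           | S p => fibZ m + fibZ p
           end
  end.

Definition cantor (x y : nat) : nat := (x + y) * (x + y + 1) / 2 + x.

Fixpoint seqZ_from (i : nat) (s : list nat) : nat :=
  match s with
  | [] => 0
  | a :: s' => fibZ (2 * cantor a i + 1) + seqZ_from (S i) s'
  end.

Definition seqZ (s : list nat) : nat := seqZ_from 1 s.

Definition code (c : symbol -> nat) (f : formula) : nat :=
  seqZ (map c (formula_syms f)).

Fixpoint occurs_term (x : nat) (t : term) : bool :=
  match t with
  | tvar i => Nat.eqb i x
  | tzero => false
  | tsucc u => occurs_term x u
  | tplus u v | ttimes u v => occurs_term x u || occurs_term x v
  end.

Fixpoint free_in (x : nat) (f : formula) : bool :=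
  match f with
  | feq u v | fle u v => occurs_term x u || occurs_term x v
  | fneg g => free_in x g
  | fimp g h => free_in x g || free_in x h
  | fall i g => if Nat.eqb i x then false else free_in x g
  end.

Definition sentence (f : formula) : Prop := forall x, free_in x f = false.

Fixpoint subst_term (x : nat) (t : term) (u : term) : term :=
  match u with
  | tvar i => if Nat.eqb i x then t else tvar i
  | tzero => tzero
  | tsucc v => tsucc (subst_term x t v)
  | tplus v w => tplus (subst_term x t v) (subst_term x t w)
  | ttimes v w => ttimes (subst_term x t v) (subst_term x t w)
  end.

Fixpoint subst (x : nat) (t : term) (f : formula) : formula :=
  match f with
  | feq u v => feq (subst_term x t u) (subst_term x t v)
  | fle u v => fle (subst_term x t u) (subst_term x t v)
  | fneg g => fneg (subst x t g)
  | fimp g h => fimp (subst x t g) (subst x t h)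
  | fall i g => if Nat.eqb i x then fall i g else fall i (subst x t g)
  end.

Fixpoint free_for (t : term) (x : nat) (f : formula) : bool :=
  match f with
  | feq _ _ | fle _ _ => true
  | fneg g => free_for t x g
  | fimp g h => free_for t x g && free_for t x h
  | fall i g =>
      if negb (free_in x (fall i g)) then true
      else negb (occurs_term i t) && free_for t x g
  end.

Fixpoint numeral (n : nat) : term :=
  match n with
  | 0 => tzero
  | S m => tsucc (numeral m)
  end.

Inductive logical_axiom : formula -> Prop :=
| LA1 a b : logical_axiom (fimp a (fimp b a))
| LA2 a b c : logical_axiom
    (fimp (fimp a (fimp b c)) (fimp (fimp a b) (fimp a c)))
| LA3 a b : logical_axiom
    (fimp (fimp (fneg b) (fneg a)) (fimp (fimp (fneg b) a) b))
| LA4 x t a : free_for t x a = true ->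
    logical_axiom (fimp (fall x a) (subst x t a))
| LA5 x a b : free_in x a = false ->
    logical_axiom (fimp (fall x (fimp a b)) (fimp a (fall x b)))
| LEqRefl x : logical_axiom (feq (tvar x) (tvar x))
| LEqEq x y z : logical_axiom
    (fimp (feq (tvar x) (tvar y))
          (fimp (feq (tvar x) (tvar z)) (feq (tvar y) (tvar z))))
| LEqLe1 x y z : logical_axiom
    (fimp (feq (tvar x) (tvar y))
          (fimp (fle (tvar x) (tvar z)) (fle (tvar y) (tvar z))))
| LEqLe2 x y z : logical_axiom
    (fimp (feq (tvar x) (tvar y))
          (fimp (fle (tvar z) (tvar x)) (fle (tvar z) (tvar y))))
| LEqSucc x y : logical_axiom
    (fimp (feq (tvar x) (tvar y)) (feq (tsucc (tvar x)) (tsucc (tvar y))))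
| LEqPlus1 x y z : logical_axiom
    (fimp (feq (tvar x) (tvar y))
          (feq (tplus (tvar x) (tvar z)) (tplus (tvar y) (tvar z))))
| LEqPlus2 x y z : logical_axiom
    (fimp (feq (tvar x) (tvar y))
          (feq (tplus (tvar z) (tvar x)) (tplus (tvar z) (tvar y))))
| LEqTimes1 x y z : logical_axiom
    (fimp (feq (tvar x) (tvar y))
          (feq (ttimes (tvar x) (tvar z)) (ttimes (tvar y) (tvar z))))
| LEqTimes2 x y z : logical_axiom
    (fimp (feq (tvar x) (tvar y))
          (feq (ttimes (tvar z) (tvar x)) (ttimes (tvar z) (tvar y)))).

Inductive provable (T : formula -> Prop) : formula -> Prop :=
| PHyp f : T f -> provable T f
| PAx f : logical_axiom f -> provable T f
| PMP a b : provable T a -> provable T (fimp a b) -> provable T b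
| PGen x a : provable T a -> provable T (fall x a).

Definition consistent (T : formula -> Prop) : Prop :=
  ~ exists f, provable T f /\ provable T (fneg f).

Inductive delta0 : formula -> Prop :=
| D0eq u v : delta0 (feq u v)
| D0le u v : delta0 (fle u v)
| D0neg g : delta0 g -> delta0 (fneg g)
| D0imp g h : delta0 g -> delta0 h -> delta0 (fimp g h)
(* bounded quantifier  forall v_x <= t, g  (v_x not occurring in t);
   the bounded existential is  ~ forall v_x <= t, ~ g *)
| D0ball x t g : occurs_term x t = false -> delta0 g ->
    delta0 (fall x (fimp (fle (tvar x) t) g)).

Definition v0 := tvar 0.
Definition v1 := tvar 1.
Definition v2 := tvar 2.

Inductive IDelta0_axiom : formula -> Prop :=
| B1 : IDelta0_axiom (fneg (feq (tsucc v0) tzero))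
| B2 : IDelta0_axiom (fimp (feq (tsucc v0) (tsucc v1)) (feq v0 v1))
| B3 : IDelta0_axiom (feq (tplus v0 tzero) v0)
| B4 : IDelta0_axiom (feq (tplus v0 (tsucc v1)) (tsucc (tplus v0 v1)))
| B5 : IDelta0_axiom (feq (ttimes v0 tzero) tzero)
| B6 : IDelta0_axiom (feq (ttimes v0 (tsucc v1)) (tplus (ttimes v0 v1) v0))
| B7 : IDelta0_axiom (fiff (fle v0 v1) (fex 2 (feq (tplus v2 v0) v1)))
| Ind x g : delta0 g ->
    IDelta0_axiom
      (fimp (subst x tzero g)
            (fimp (fall x (fimp g (subst x (tsucc (tvar x)) g)))
                  (fall x g))).

Fixpoint eval (e : nat -> nat) (t : term) : nat :=
  match t with
  | tvar i => e i
  | tzero => 0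
  | tsucc u => S (eval e u)
  | tplus u v => eval e u + eval e v
  | ttimes u v => eval e u * eval e v
  end.

Definition update (e : nat -> nat) (x a : nat) : nat -> nat :=
  fun i => if Nat.eqb i x then a else e i.

Fixpoint sat (e : nat -> nat) (f : formula) : Prop :=
  match f with
  | feq u v => eval e u = eval e v
  | fle u v => eval e u <= eval e v
  | fneg g => ~ sat e g
  | fimp g h => sat e g -> sat e h
  | fall i g => forall a, sat (update e i a) g
  end.

Definition omega1 (a : nat) : nat := a ^ Nat.log2 a.

Definition omega1_graph (E : formula) (x y : nat) : Prop :=
  x <> y /\ delta0 E /\ (forall z, free_in z E = true -> z = x \/ z = y) /\
  forall e, 0 < e x -> (sat e E <-> e y = omega1 (e x)).

Definition extends_IDelta0_Omega1 (T : formula -> Prop) : Prop :=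
  (forall f, IDelta0_axiom f -> provable T f) /\
  exists E x y, omega1_graph E x y /\ provable T (fall x (fex y E)).

(** Let [d] send [N = (n + L)^2 + L] to the code of the string obtained from
    the string coded by [n], whose last symbol is a [v_0] at position [L], by
    replacing that [v_0] with the numeral of [N].  Because [Seq_Z] is a
    sum over positions, [d] is given by an explicit formula in Fibonacci
    numbers and Cantor pairs, so Goedel's beta function gives it a [Delta_0]
    graph [D], and [Delta_0]-completeness makes [D] represent [d] in
    [I Delta_0].  Put
      [theta(h) := exists x (phi /\ forall y (y = x -> forall z (~ D(z, y) -> ~ h)))],
    let [n] be the code of [theta(v_z = v_0)], [L] the position of its last
    [v_0], and [psi := theta(v_z = N)] with [N = (n + L)^2 + L].  Then
    [d(N)] is the code of [psi], and [T] proves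
      [psi <-> exists x (phi /\ D(N, x)) <-> exists x (phi /\ x = d(N)) <-> phi(d(N))]. *)

From Stdlib Require Import Arith Lia List Bool Classical Factorial.
Import ListNotations.

(** * Syntax and the standard model *)

Definition closed_term (t : term) : Prop := forall i, occurs_term i t = false.

Lemma closed_numeral n : closed_term (numeral n).
Proof. intro i; induction n; simpl; auto. Qed.

Lemma subst_term_not_occurs x t u : occurs_term x u = false -> subst_term x t u = u.
Proof.
  induction u; simpl; intros H; auto.
  - rewrite H; auto.
  - rewrite IHu; auto.
  - apply orb_false_iff in H; destruct H; rewrite IHu1, IHu2; auto.
  - apply orb_false_iff in H; destruct H; rewrite IHu1, IHu2; auto.
Qed.

Lemma free_for_closed t x f : closed_term t -> free_for t x f = true.
Proof.
  intros Ht; induction f; simpl; auto.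
  - rewrite IHf1, IHf2; auto.
  - destruct (negb _); auto. rewrite Ht, IHf; auto.
Qed.

Fixpoint qfree (f : formula) : bool :=
  match f with
  | feq _ _ | fle _ _ => true
  | fneg g => qfree g
  | fimp g h => qfree g && qfree h
  | fall _ _ => false
  end.

Lemma free_for_qfree t x f : qfree f = true -> free_for t x f = true.
Proof.
  induction f; simpl; intros H; auto.
  apply andb_true_iff in H; destruct H; rewrite IHf1, IHf2; auto.
  discriminate.
Qed.

Lemma qfree_subst x t f : qfree f = true -> qfree (subst x t f) = true.
Proof.
  induction f; simpl; intros H; auto.
  apply andb_true_iff in H; destruct H; rewrite IHf1, IHf2; auto.
  discriminate.
Qed.

Lemma eval_ext e e' t :
  (forall i, occurs_term i t = true -> e i = e' i) -> eval e t = eval e' t.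
Proof.
  induction t; simpl; intros H; auto.
  - apply H. apply Nat.eqb_refl.
  - rewrite IHt1, IHt2; auto; intros i Hi; apply H; rewrite Hi; auto with bool.
  - rewrite IHt1, IHt2; auto; intros i Hi; apply H; rewrite Hi; auto with bool.
Qed.

Lemma eval_closed e e' t : closed_term t -> eval e t = eval e' t.
Proof. intros Ht; apply eval_ext; intros i Hi; rewrite Ht in Hi; discriminate. Qed.

Lemma eval_numeral e n : eval e (numeral n) = n.
Proof. induction n; simpl; auto. Qed.

Lemma update_eq e x a : update e x a x = a.
Proof. unfold update; rewrite Nat.eqb_refl; auto. Qed.

Lemma eval_update_not_occurs e x a t :
  occurs_term x t = false -> eval (update e x a) t = eval e t.
Proof.
  intros H; apply eval_ext; intros i Hi. unfold update.
  destruct (Nat.eqb i x) eqn:E; auto. apply Nat.eqb_eq in E; subst; congruence.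
Qed.

Lemma sat_ext f : forall e e',
  (forall i, free_in i f = true -> e i = e' i) -> (sat e f <-> sat e' f).
Proof.
  induction f; simpl; intros e e' H.
  - rewrite (eval_ext e e' t), (eval_ext e e' t0); try tauto;
    intros i Hi; apply H; rewrite Hi; auto with bool.
  - rewrite (eval_ext e e' t), (eval_ext e e' t0); try tauto;
    intros i Hi; apply H; rewrite Hi; auto with bool.
  - rewrite (IHf e e'); tauto.
  - rewrite (IHf1 e e'), (IHf2 e e'); try tauto;
    intros i Hi; apply H; rewrite Hi; auto with bool.
  - split; intros Hs a;
      [rewrite <- (IHf (update e n a)) | rewrite (IHf (update e n a))]; auto;
      intros i Hi; unfold update; destruct (Nat.eqb i n) eqn:E; auto;
      apply H; rewrite Nat.eqb_sym, E; auto.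
Qed.

Lemma sat_fand e a b : sat e (fand a b) <-> sat e a /\ sat e b.
Proof. simpl. tauto. Qed.

Lemma eval_subst_term e x t u :
  eval e (subst_term x t u) = eval (update e x (eval e t)) u.
Proof.
  induction u; simpl; auto.
  unfold update; destruct (Nat.eqb n x); auto.
Qed.

Lemma subst_not_free x t f : free_in x f = false -> subst x t f = f.
Proof.
  induction f; simpl; intros H.
  - apply orb_false_iff in H; destruct H; rewrite !subst_term_not_occurs; auto.
  - apply orb_false_iff in H; destruct H; rewrite !subst_term_not_occurs; auto.
  - rewrite IHf; auto.
  - apply orb_false_iff in H; destruct H; rewrite IHf1, IHf2; auto.
  - destruct (Nat.eqb n x) eqn:E; auto. rewrite IHf; auto.
Qed.

Lemma sat_update_not_free e x a f : free_in x f = false -> (sat (update e x a) f <-> sat e f).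
Proof.
  intros H; apply sat_ext; intros i Hi; unfold update.
  destruct (Nat.eqb i x) eqn:E; auto. apply Nat.eqb_eq in E; subst; congruence.
Qed.

Lemma sat_subst x t f : free_for t x f = true ->
  forall e, sat e (subst x t f) <-> sat (update e x (eval e t)) f.
Proof.
  induction f; simpl; intros Hf e.
  - rewrite !eval_subst_term; tauto.
  - rewrite !eval_subst_term; tauto.
  - rewrite IHf; tauto.
  - apply andb_true_iff in Hf; destruct Hf. rewrite IHf1, IHf2; tauto.
  - destruct (free_in x (fall n f)) eqn:Hx.
    + simpl in Hx. destruct (Nat.eqb n x) eqn:E; [discriminate|]. simpl in Hf.
      rewrite Hx in Hf. simpl in Hf. apply andb_true_iff in Hf. destruct Hf as [Hn Hf].
      apply negb_true_iff in Hn. simpl.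
      assert (Hu : forall a i, update (update e n a) x (eval (update e n a) t) i =
                               update (update e x (eval e t)) n a i).
      { intros a i; rewrite eval_update_not_occurs by auto. unfold update.
        destruct (Nat.eqb i x) eqn:E1; destruct (Nat.eqb i n) eqn:E2; auto.
        apply Nat.eqb_eq in E1; apply Nat.eqb_eq in E2; subst.
        rewrite Nat.eqb_refl in E; discriminate. }
      split; intros Hs a; specialize (Hs a).
      * rewrite IHf in Hs by auto. rewrite <- (sat_ext f _ _ (fun i _ => Hu a i)); auto.
      * rewrite IHf by auto. rewrite (sat_ext f _ _ (fun i _ => Hu a i)); auto.
    + change (sat e (subst x t (fall n f)) <-> sat (update e x (eval e t)) (fall n f)).
      rewrite subst_not_free by auto. rewrite sat_update_not_free by auto. tauto.
Qed.

Lemma sat_subst_closed x t f : closed_term t ->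
  forall e, sat e (subst x t f) <-> sat (update e x (eval e t)) f.
Proof. intros Ht; apply sat_subst, free_for_closed, Ht. Qed.

Lemma occurs_subst_term v x t u : occurs_term v (subst_term x t u) = true ->
  (occurs_term v u = true /\ v <> x) \/ occurs_term v t = true.
Proof.
  induction u; simpl; intros H; auto; try discriminate.
  - destruct (Nat.eqb n x) eqn:E; auto. simpl in H. left; split; auto.
    apply Nat.eqb_eq in H; apply Nat.eqb_neq in E; subst; auto.
  - apply orb_true_iff in H; destruct H as [H|H]; [destruct (IHu1 H) | destruct (IHu2 H)];
    intuition; left; rewrite H1; auto with bool.
  - apply orb_true_iff in H; destruct H as [H|H]; [destruct (IHu1 H) | destruct (IHu2 H)];
    intuition; left; rewrite H1; auto with bool.
Qed.

Lemma free_in_subst v x t f : free_in v (subst x t f) = true ->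
  (free_in v f = true /\ v <> x) \/ occurs_term v t = true.
Proof.
  induction f; simpl; intros H.
  - apply orb_true_iff in H; destruct H as [H|H]; destruct (occurs_subst_term _ _ _ _ H);
    intuition; left; rewrite H1; auto with bool.
  - apply orb_true_iff in H; destruct H as [H|H]; destruct (occurs_subst_term _ _ _ _ H);
    intuition; left; rewrite H1; auto with bool.
  - auto.
  - apply orb_true_iff in H; destruct H as [H|H]; [destruct (IHf1 H) | destruct (IHf2 H)];
    intuition; left; rewrite H1; auto with bool.
  - destruct (Nat.eqb n x) eqn:E; simpl in H.
    + destruct (Nat.eqb n v) eqn:E2; try discriminate. left; split; auto.
      apply Nat.eqb_eq in E; subst. intro; subst; rewrite Nat.eqb_refl in E2; discriminate.
    + destruct (Nat.eqb n v) eqn:E2; try discriminate. destruct (IHf H); auto.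
Qed.

Lemma sentence_subst x t f : closed_term t -> (forall y, free_in y f = true -> y = x) ->
  sentence (subst x t f).
Proof.
  intros Ht Hf y. destruct (free_in y (subst x t f)) eqn:E; auto.
  destruct (free_in_subst _ _ _ _ E) as [[H1 H2]|H]; [apply Hf in H1; congruence|].
  rewrite Ht in H; discriminate.
Qed.

Fixpoint fsize (f : formula) : nat :=
  match f with
  | feq _ _ | fle _ _ => 1
  | fneg g => S (fsize g)
  | fimp g h => S (fsize g + fsize h)
  | fall _ g => S (fsize g)
  end.

Lemma fsize_subst x t f : fsize (subst x t f) = fsize f.
Proof. induction f; simpl; auto. destruct (Nat.eqb n x); simpl; auto. Qed.

Lemma delta0_subst x t g : closed_term t -> delta0 g -> delta0 (subst x t g).
Proof.
  intros Ht H; induction H; simpl; try constructor; auto.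
  destruct (Nat.eqb x0 x); constructor; auto.
  destruct (occurs_term x0 (subst_term x t t0)) eqn:E2; auto.
  destruct (occurs_subst_term _ _ _ _ E2) as [[H1 _]|H1]; congruence.
Qed.

Fixpoint term_vars (t : term) : list nat :=
  match t with
  | tvar i => [i]
  | tzero => []
  | tsucc u => term_vars u
  | tplus u v | ttimes u v => term_vars u ++ term_vars v
  end.

Fixpoint free_vars (f : formula) : list nat :=
  match f with
  | feq u v | fle u v => term_vars u ++ term_vars v
  | fneg g => free_vars g
  | fimp g h => free_vars g ++ free_vars h
  | fall i g => filter (fun j => negb (Nat.eqb j i)) (free_vars g)
  end.

Lemma occurs_term_vars v t : occurs_term v t = true -> In v (term_vars t).
Proof.
  induction t; simpl; intros H; try discriminate; auto.
  - left; apply Nat.eqb_eq in H; auto.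
  - apply in_or_app; apply orb_true_iff in H; intuition.
  - apply in_or_app; apply orb_true_iff in H; intuition.
Qed.

Lemma free_in_free_vars v f : free_in v f = true -> In v (free_vars f).
Proof.
  induction f; simpl; intros H.
  - apply in_or_app; apply orb_true_iff in H; destruct H; [left|right];
      apply occurs_term_vars; auto.
  - apply in_or_app; apply orb_true_iff in H; destruct H; [left|right];
      apply occurs_term_vars; auto.
  - auto.
  - apply in_or_app; apply orb_true_iff in H; intuition.
  - destruct (Nat.eqb n v) eqn:E; try discriminate.
    apply filter_In; split; auto. rewrite Nat.eqb_sym, E; auto.
Qed.

Fixpoint bound_vars (f : formula) : list nat :=
  match f with
  | feq _ _ | fle _ _ => []
  | fneg g => bound_vars g
  | fimp g h => bound_vars g ++ bound_vars h
  | fall i g => i :: bound_vars g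
  end.

Lemma bound_vars_subst x t f : bound_vars (subst x t f) = bound_vars f.
Proof.
  induction f; simpl; auto.
  - rewrite IHf1, IHf2; auto.
  - destruct (Nat.eqb n x); simpl; auto. rewrite IHf; auto.
Qed.

Lemma free_for_not_bound t x f :
  (forall v, occurs_term v t = true -> ~ In v (bound_vars f)) -> free_for t x f = true.
Proof.
  induction f; simpl; intros H; auto.
  - rewrite IHf1, IHf2; auto; intros v Hv Hin; apply (H v Hv), in_or_app; auto.
  - destruct (negb _); auto. rewrite IHf by (intros v Hv Hin; apply (H v Hv); auto).
    destruct (occurs_term n t) eqn:E; auto. exfalso; apply (H n E); auto.
Qed.

Definition max_var (t : term) : nat := list_max (term_vars t).

Lemma not_occurs_above_max_var i t : max_var t < i -> occurs_term i t = false.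
Proof.
  intros H; destruct (occurs_term i t) eqn:E; auto.
  apply occurs_term_vars in E.
  assert (Hle := proj1 (list_max_le (term_vars t) (max_var t)) (le_n _)).
  rewrite Forall_forall in Hle. specialize (Hle _ E). lia.
Qed.

Fixpoint iter_succ (n : nat) (t : term) : term :=
  match n with 0 => t | S m => tsucc (iter_succ m t) end.

Lemma numeral_iter_succ n : numeral n = iter_succ n tzero.
Proof. induction n; simpl; auto; rewrite ?IHn; auto. Qed.

Lemma iter_succ_succ n t : iter_succ n (tsucc t) = iter_succ (S n) t.
Proof. induction n; simpl; auto; rewrite ?IHn; auto. Qed.

Lemma iter_succ_numeral n a : iter_succ n (numeral a) = numeral (n + a).
Proof. induction n; simpl; auto. rewrite IHn; auto. Qed.

Lemma subst_iter_succ x t n s :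
  subst_term x t (iter_succ n s) = iter_succ n (subst_term x t s).
Proof. induction n; simpl; auto. rewrite IHn; auto. Qed.

Ltac eqb_simpl :=
  repeat match goal with
  | |- context [Nat.eqb ?a ?a] => rewrite (Nat.eqb_refl a)
  | |- context [Nat.eqb ?a ?b] => rewrite (proj2 (Nat.eqb_neq a b)) by lia
  end.

Ltac numeral_simpl :=
  repeat match goal with
  | |- context [subst_term ?v ?r (numeral ?n)] =>
      rewrite (subst_term_not_occurs v r (numeral n)) by apply closed_numeral
  end.

Ltac not_occurs_simpl :=
  repeat match goal with
  | |- context [subst_term ?i ?s ?a] =>
      rewrite (subst_term_not_occurs i s a)
        by first [apply not_occurs_above_max_var; lia | apply closed_numeral | auto]
  end.

Ltac subst_simpl := repeat progress (cbn [subst subst_term]; eqb_simpl; not_occurs_simpl).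

(** * Propositional logic *)

Definition fdisj (a b : formula) : formula := fimp (fneg a) b.
Definition fbot : formula := fneg (feq tzero tzero).

Section Propositional.
Variable T : formula -> Prop.

Lemma imp_refl A : provable T (fimp A A).
Proof.
  eapply PMP; [apply PAx, (LA1 A A)|].
  eapply PMP; [apply PAx, (LA1 A (fimp A A))|].
  apply PAx, LA2.
Qed.

Inductive derivable (G : list formula) : formula -> Prop :=
| der_hyp A : In A G -> derivable G A
| der_thm A : provable T A -> derivable G A
| der_mp A B : derivable G A -> derivable G (fimp A B) -> derivable G B.

Lemma der_ax G A : logical_axiom A -> derivable G A.
Proof. intros; apply der_thm, PAx; auto. Qed.

Lemma deduction G A B : derivable (A :: G) B -> derivable G (fimp A B).
Proof.
  intros H; induction H.
  - destruct H as [H|H].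
    + subst; apply der_thm, imp_refl.
    + eapply der_mp; [apply der_hyp; eauto| apply der_ax, LA1].
  - eapply der_mp; [apply der_thm; eauto| apply der_ax, LA1].
  - eapply der_mp; [exact IHderivable1|].
    eapply der_mp; [exact IHderivable2| apply der_ax, LA2].
Qed.

Lemma derivable_nil A : derivable [] A -> provable T A.
Proof.
  intros H; induction H; auto. destruct H. exact (PMP _ _ _ IHderivable1 IHderivable2).
Qed.

Ltac hyp := apply der_hyp; simpl; tauto.

Lemma neg_neg_elim B : provable T (fimp (fneg (fneg B)) B).
Proof.
  apply derivable_nil, deduction.
  eapply der_mp; [| eapply der_mp; [| apply der_ax, (LA3 (fneg B) B)]].
  - apply der_thm, imp_refl.
  - eapply der_mp; [|apply der_ax, LA1]; hyp.
Qed.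

Lemma neg_neg_intro B : provable T (fimp B (fneg (fneg B))).
Proof.
  apply derivable_nil, deduction.
  eapply der_mp; [| eapply der_mp; [| apply der_ax, (LA3 B (fneg (fneg B)))]].
  - eapply der_mp; [|apply der_ax, LA1]; hyp.
  - apply der_thm, neg_neg_elim.
Qed.

Lemma neg_imp_any A B : provable T (fimp (fneg A) (fimp A B)).
Proof.
  apply derivable_nil, deduction, deduction.
  eapply der_mp; [| eapply der_mp; [| apply der_ax, (LA3 A B)]].
  - eapply der_mp; [|apply der_ax, LA1]; hyp.
  - eapply der_mp; [|apply der_ax, LA1]; hyp.
Qed.

Lemma contraposition_inv A B : provable T (fimp (fimp (fneg B) (fneg A)) (fimp A B)).
Proof.
  apply derivable_nil, deduction, deduction.
  eapply der_mp; [| eapply der_mp; [| apply der_ax, (LA3 A B)]].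
  - eapply der_mp; [|apply der_ax, LA1]; hyp.
  - hyp.
Qed.

Lemma contraposition A B : provable T (fimp (fimp A B) (fimp (fneg B) (fneg A))).
Proof.
  apply derivable_nil, deduction.
  eapply der_mp; [| apply der_thm, contraposition_inv].
  apply deduction.
  eapply der_mp; [| apply der_thm, neg_neg_intro].
  eapply der_mp; [| hyp].
  eapply der_mp; [hyp| apply der_thm, neg_neg_elim].
Qed.

Lemma imp_neg_neg_imp A B : provable T (fimp A (fimp (fneg B) (fneg (fimp A B)))).
Proof.
  apply derivable_nil, deduction.
  eapply der_mp; [| apply der_thm, contraposition].
  apply deduction. eapply der_mp; [| hyp]. hyp.
Qed.

Lemma imp_cases A B : provable T (fimp (fimp A B) (fimp (fimp (fneg A) B) B)).
Proof.
  apply derivable_nil, deduction, deduction.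
  eapply der_mp; [| eapply der_mp; [| apply der_ax, (LA3 A B)]].
  - apply deduction. eapply der_mp; [| apply der_thm, neg_neg_elim].
    eapply der_mp; [| (eapply der_mp; [|apply der_thm, contraposition]; hyp)]. hyp.
  - eapply der_mp; [| apply der_thm, contraposition]. hyp.
Qed.

Inductive pform := PAt (n : nat) | PNeg (p : pform) | PImp (p q : pform).

Fixpoint interp (l : list formula) (p : pform) : formula :=
  match p with
  | PAt n => nth n l fbot
  | PNeg q => fneg (interp l q)
  | PImp q r => fimp (interp l q) (interp l r)
  end.

Fixpoint evalp (v : nat -> bool) (p : pform) : bool :=
  match p with
  | PAt n => v n
  | PNeg q => negb (evalp v q)
  | PImp q r => implb (evalp v q) (evalp v r)
  end.

Fixpoint max_atom (p : pform) : nat :=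
  match p with
  | PAt n => n
  | PNeg q => max_atom q
  | PImp q r => Nat.max (max_atom q) (max_atom r)
  end.

Definition literal (l : list formula) (v : nat -> bool) (i : nat) : formula :=
  if v i then nth i l fbot else fneg (nth i l fbot).

Definition signed (v : nat -> bool) (p : pform) (l : list formula) : formula :=
  if evalp v p then interp l p else fneg (interp l p).

Lemma kalmar l v p n :
  max_atom p < n -> derivable (map (literal l v) (seq 0 n)) (signed v p l).
Proof.
  unfold signed; induction p; simpl; intros Hn.
  - apply der_hyp, (in_map (literal l v)), in_seq; lia.
  - specialize (IHp Hn). destruct (evalp v p); simpl; auto.
    eapply der_mp; [exact IHp| apply der_thm, neg_neg_intro].
  - specialize (IHp1 ltac:(lia)); specialize (IHp2 ltac:(lia)).
    destruct (evalp v p1); destruct (evalp v p2); simpl.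
    + eapply der_mp; [exact IHp2| apply der_ax, LA1].
    + eapply der_mp; [exact IHp2|].
      eapply der_mp; [exact IHp1| apply der_thm, imp_neg_neg_imp].
    + eapply der_mp; [exact IHp2| apply der_ax, LA1].
    + eapply der_mp; [exact IHp1| apply der_thm, neg_imp_any].
Qed.

Definition update_val (v : nat -> bool) (j : nat) (b : bool) : nat -> bool :=
  fun i => if Nat.eqb i j then b else v i.

Lemma map_literal_ext l v v' j k : (forall i, j <= i -> v i = v' i) ->
  map (literal l v) (seq j k) = map (literal l v') (seq j k).
Proof.
  intros H; apply map_ext_in; intros i Hi; apply in_seq in Hi.
  unfold literal; rewrite H; auto; lia.
Qed.

(** Discharging the literals one at a time, by cases on each atom. *)
Lemma derivable_all_valuations l P n :
  (forall v, derivable (map (literal l v) (seq 0 n)) P) -> derivable [] P.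
Proof.
  intros H.
  assert (Hg : forall j, j <= n -> forall v, derivable (map (literal l v) (seq j (n - j))) P).
  { induction j; intros Hj v.
    - replace (n - 0) with n by lia; auto.
    - assert (Hs : forall b, map (literal l (update_val v j b)) (seq j (n - j)) =
                literal l (update_val v j b) j :: map (literal l v) (seq (S j) (n - S j))).
      { intros b. replace (n - j) with (S (n - S j)) by lia. simpl. f_equal.
        apply map_literal_ext. intros i Hi. unfold update_val.
        replace (Nat.eqb i j) with false; auto. symmetry; apply Nat.eqb_neq; lia. }
      assert (Ht := IHj ltac:(lia) (update_val v j true)).
      assert (Hf := IHj ltac:(lia) (update_val v j false)).
      rewrite Hs in Ht, Hf. unfold literal at 1 in Ht. unfold literal at 1 in Hf.
      unfold update_val at 1 in Ht. unfold update_val at 1 in Hf. rewrite Nat.eqb_refl in Ht, Hf.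
      apply deduction in Ht; apply deduction in Hf.
      eapply der_mp; [exact Hf|]. eapply der_mp; [exact Ht|]. apply der_thm, imp_cases. }
  specialize (Hg n (le_n n) (fun _ => true)). replace (n - n) with 0 in Hg by lia. exact Hg.
Qed.

Fixpoint all_valuations (n : nat) : list (list bool) :=
  match n with
  | 0 => [[]]
  | S m => map (cons true) (all_valuations m) ++ map (cons false) (all_valuations m)
  end.

Definition tautology_check (p : pform) : bool :=
  forallb (fun b => evalp (fun i => nth i b false) p) (all_valuations (S (max_atom p))).

Lemma evalp_ext p v v' :
  (forall i, i <= max_atom p -> v i = v' i) -> evalp v p = evalp v' p.
Proof.
  induction p; simpl; intros H.
  - apply H; lia.
  - rewrite IHp; auto.
  - rewrite IHp1, IHp2; auto; intros; apply H; lia.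
Qed.

Lemma in_all_valuations v n : In (map v (seq 0 n)) (all_valuations n).
Proof.
  revert v; induction n; intros v; simpl; auto.
  rewrite <- seq_shift, map_map.
  apply in_or_app. destruct (v 0); [left|right]; apply in_map, IHn.
Qed.

Lemma tautology_check_sound p : tautology_check p = true -> forall v, evalp v p = true.
Proof.
  unfold tautology_check; intros H v. rewrite forallb_forall in H.
  rewrite <- (H _ (in_all_valuations v (S (max_atom p)))).
  apply evalp_ext. intros i Hi.
  rewrite nth_indep with (d' := v 0) by (rewrite length_map, length_seq; lia).
  rewrite map_nth, seq_nth; auto; lia.
Qed.

Lemma provable_tautology l p : tautology_check p = true -> provable T (interp l p).
Proof.
  intros H. apply derivable_nil, (derivable_all_valuations l _ (S (max_atom p))).
  intros v. assert (K := kalmar l v p (S (max_atom p)) (Nat.lt_succ_diag_r _)).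
  unfold signed in K. rewrite (tautology_check_sound p H v) in K. exact K.
Qed.

End Propositional.

Ltac atom_mem a l :=
  match l with
  | context [cons a _] => constr:(true)
  | _ => constr:(false)
  end.

Ltac collect_atoms f l :=
  match f with
  | fneg ?a => collect_atoms a l
  | fimp ?a ?b => let l1 := collect_atoms a l in collect_atoms b l1
  | fand ?a ?b => let l1 := collect_atoms a l in collect_atoms b l1
  | fiff ?a ?b => let l1 := collect_atoms a l in collect_atoms b l1
  | fdisj ?a ?b => let l1 := collect_atoms a l in collect_atoms b l1
  | _ => let b := atom_mem f l in
         match b with true => l | false => constr:(cons f l) end
  end.

Ltac rev_list l acc :=
  match l with
  | nil => acc
  | cons ?a ?l' => rev_list l' constr:(cons a acc)
  end.

Ltac atom_index a l :=
  match l with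
  | cons a _ => constr:(0)
  | cons _ ?l' => let n := atom_index a l' in constr:(S n)
  end.

Ltac reify f l :=
  match f with
  | fneg ?a => let p := reify a l in constr:(PNeg p)
  | fimp ?a ?b => let p := reify a l in let q := reify b l in constr:(PImp p q)
  | fand ?a ?b => let p := reify a l in let q := reify b l in constr:(PNeg (PImp p (PNeg q)))
  | fiff ?a ?b => let p := reify a l in let q := reify b l in
                  constr:(PNeg (PImp (PImp p q) (PNeg (PImp q p))))
  | fdisj ?a ?b => let p := reify a l in let q := reify b l in constr:(PImp (PNeg p) q)
  | _ => let i := atom_index f l in constr:(PAt i)
  end.

(** Proves a goal [provable T f] whose propositional skeleton is a tautology. *)
Ltac taut :=
  try unfold v0, v1, v2;
  match goal with
  | |- provable ?T ?f =>
      let l0 := collect_atoms f (@nil formula) in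
      let l := rev_list l0 (@nil formula) in
      let p := reify f l in
      change (provable T (interp l p)); apply provable_tautology; vm_compute; reflexivity
  end.

(** [taut using (H1, ..., Hn)]: the goal follows tautologically from the
    formulas proved by [H1], ..., [Hn]. *)
Ltac taut_from p :=
  lazymatch type of p with
  | (_ * _)%type => refine (PMP _ _ _ (snd p) _); taut_from (fst p)
  | _ => refine (PMP _ _ _ p _); taut
  end.

Tactic Notation "taut" "using" constr(p) := taut_from p.

(** * Quantifiers and equality *)

Lemma subst_term_var_id x u : subst_term x (tvar x) u = u.
Proof.
  induction u; simpl; try congruence.
  destruct (Nat.eqb n x) eqn:E; auto. apply Nat.eqb_eq in E; subst; auto.
Qed.

Lemma subst_var_id x f : subst x (tvar x) f = f.
Proof.
  induction f; simpl; rewrite ?subst_term_var_id; try congruence.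
  destruct (Nat.eqb n x); congruence.
Qed.

Lemma free_for_var_self x f : free_for (tvar x) x f = true.
Proof.
  induction f; simpl; auto.
  - rewrite IHf1, IHf2; auto.
  - destruct (Nat.eqb n x) eqn:E; simpl; auto.
    destruct (free_in x f); simpl; auto. rewrite IHf, Nat.eqb_sym, E. auto.
Qed.

Definition subst_list (l : list (nat * term)) (f : formula) : formula :=
  fold_left (fun g p => subst (fst p) (snd p) g) l f.

Section Quantifiers.
Variable T : formula -> Prop.

Lemma provable_inst x t A :
  free_for t x A = true -> provable T (fall x A) -> provable T (subst x t A).
Proof. intros Hf H. eapply PMP; [exact H| apply PAx, LA4; auto]. Qed.

Lemma qfree_inst x t A : provable T A -> qfree A = true -> provable T (subst x t A).
Proof. intros; apply provable_inst; [apply free_for_qfree; auto| apply PGen; auto]. Qed.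

Lemma qfree_subst_list l f : provable T f -> qfree f = true -> provable T (subst_list l f).
Proof.
  revert f; induction l as [|[x t] l IH]; simpl; intros f H Hq; auto.
  apply IH; [apply qfree_inst; auto| apply qfree_subst; auto].
Qed.

Lemma all_elim x A : provable T (fimp (fall x A) A).
Proof.
  assert (H := PAx T _ (LA4 x (tvar x) A (free_for_var_self x A))).
  rewrite subst_var_id in H; exact H.
Qed.

Lemma all_intro x A B :
  free_in x B = false -> provable T (fimp B A) -> provable T (fimp B (fall x A)).
Proof. intros Hx H. eapply PMP; [apply PGen, H| apply PAx, LA5; auto]. Qed.

Lemma imp_trans A B C :
  provable T (fimp A B) -> provable T (fimp B C) -> provable T (fimp A C).
Proof. intros H1 H2. taut using (H1, H2). Qed.

Lemma all_mono x A B : provable T (fimp A B) -> provable T (fimp (fall x A) (fall x B)).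
Proof.
  intros H. apply all_intro; [simpl; rewrite Nat.eqb_refl; auto|].
  eapply imp_trans; [apply all_elim| exact H].
Qed.

Lemma all_iff x A B : provable T (fiff A B) -> provable T (fiff (fall x A) (fall x B)).
Proof.
  intros H.
  assert (H1 : provable T (fimp (fall x A) (fall x B))) by (apply all_mono; taut using H).
  assert (H2 : provable T (fimp (fall x B) (fall x A))) by (apply all_mono; taut using H).
  taut using (H1, H2).
Qed.

Lemma ex_intro x t A : free_for t x A = true -> provable T (fimp (subst x t A) (fex x A)).
Proof.
  intros Hf. assert (H := PAx T _ (LA4 x t (fneg A) Hf)). simpl in H.
  unfold fex. taut using H.
Qed.

Lemma ex_elim x A B :
  free_in x B = false -> provable T (fimp A B) -> provable T (fimp (fex x A) B).
Proof.
  intros Hx H. assert (H1 : provable T (fimp (fneg B) (fneg A))) by taut using H.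
  apply all_intro with (x := x) in H1; [|simpl; auto]. unfold fex. taut using H1.
Qed.

Lemma ex_iff x A B : provable T (fiff A B) -> provable T (fiff (fex x A) (fex x B)).
Proof.
  intros H. assert (H1 : provable T (fiff (fneg A) (fneg B))) by taut using H.
  apply all_iff with (x := x) in H1. unfold fex. taut using H1.
Qed.

Lemma bex_intro x t A B : free_for t x (fimp A (fneg B)) = true ->
  provable T (subst x t A) -> provable T (subst x t B) ->
  provable T (fneg (fall x (fimp A (fneg B)))).
Proof.
  intros Hf H1 H2. assert (H := PAx T _ (LA4 x t _ Hf)). simpl in H.
  taut using (H1, H2, H).
Qed.

Lemma bex_elim x A B C : free_in x C = false -> provable T (fimp A (fimp B C)) ->
  provable T (fimp (fneg (fall x (fimp A (fneg B)))) C).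
Proof.
  intros Hx H. assert (H1 : provable T (fimp (fneg C) (fimp A (fneg B)))) by taut using H.
  apply (all_intro x) in H1; [|simpl; auto]. taut using H1.
Qed.

(** The equality axioms are stated for variables; each rule below is obtained
    by instantiating them at fresh variables and then substituting. *)

Lemma provable_eq_refl a : provable T (feq a a).
Proof. exact (qfree_inst 0 a _ (PAx T _ (LEqRefl 0)) eq_refl). Qed.

Lemma provable_eq_sym a b : provable T (fimp (feq a b) (feq b a)).
Proof.
  set (N := S (max_var a + max_var b)).
  assert (H0 : provable T (fimp (feq (tvar N) (tvar (S N))) (feq (tvar (S N)) (tvar N)))).
  { assert (H1 := PAx T _ (LEqEq N (S N) N)). assert (H2 := PAx T _ (LEqRefl N)).
    taut using (H1, H2). }
  apply (qfree_subst_list [(N, a); (S N, b)]) in H0; auto.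
  revert H0; cbn [subst_list fold_left fst snd]; subst_simpl; auto.
Qed.

Lemma provable_eq_trans a b c : provable T (fimp (feq a b) (fimp (feq b c) (feq a c))).
Proof.
  set (N := S (max_var a + max_var b + max_var c)).
  assert (H0 : provable T (fimp (feq (tvar N) (tvar (S N)))
     (fimp (feq (tvar (S N)) (tvar (S (S N)))) (feq (tvar N) (tvar (S (S N))))))).
  { assert (H1 := provable_eq_sym (tvar N) (tvar (S N))).
    assert (H2 := PAx T _ (LEqEq (S N) N (S (S N)))). taut using (H1, H2). }
  apply (qfree_subst_list [(N, a); (S N, b); (S (S N), c)]) in H0; auto.
  revert H0; cbn [subst_list fold_left fst snd]; subst_simpl; auto.
Qed.

Lemma succ_cong a b : provable T (fimp (feq a b) (feq (tsucc a) (tsucc b))).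
Proof.
  set (N := S (max_var a + max_var b)).
  assert (H0 := PAx T _ (LEqSucc N (S N))).
  apply (qfree_subst_list [(N, a); (S N, b)]) in H0; auto.
  revert H0; cbn [subst_list fold_left fst snd]; subst_simpl; auto.
Qed.

Lemma plus_cong a b c d :
  provable T (fimp (feq a b) (fimp (feq c d) (feq (tplus a c) (tplus b d)))).
Proof.
  set (N := S (max_var a + max_var b + max_var c + max_var d)).
  assert (H0 : provable T (fimp (feq (tvar N) (tvar (S N)))
     (fimp (feq (tvar (S (S N))) (tvar (S (S (S N)))))
     (feq (tplus (tvar N) (tvar (S (S N)))) (tplus (tvar (S N)) (tvar (S (S (S N))))))))).
  { assert (H1 := PAx T _ (LEqPlus1 N (S N) (S (S N)))).
    assert (H2 := PAx T _ (LEqPlus2 (S (S N)) (S (S (S N))) (S N))).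
    assert (H3 := provable_eq_trans (tplus (tvar N) (tvar (S (S N))))
                    (tplus (tvar (S N)) (tvar (S (S N))))
                    (tplus (tvar (S N)) (tvar (S (S (S N)))))).
    taut using (H1, H2, H3). }
  apply (qfree_subst_list [(N, a); (S N, b); (S (S N), c); (S (S (S N)), d)]) in H0; auto.
  revert H0; cbn [subst_list fold_left fst snd]; subst_simpl; auto.
Qed.

Lemma times_cong a b c d :
  provable T (fimp (feq a b) (fimp (feq c d) (feq (ttimes a c) (ttimes b d)))).
Proof.
  set (N := S (max_var a + max_var b + max_var c + max_var d)).
  assert (H0 : provable T (fimp (feq (tvar N) (tvar (S N)))
     (fimp (feq (tvar (S (S N))) (tvar (S (S (S N)))))
     (feq (ttimes (tvar N) (tvar (S (S N)))) (ttimes (tvar (S N)) (tvar (S (S (S N))))))))).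
  { assert (H1 := PAx T _ (LEqTimes1 N (S N) (S (S N)))).
    assert (H2 := PAx T _ (LEqTimes2 (S (S N)) (S (S (S N))) (S N))).
    assert (H3 := provable_eq_trans (ttimes (tvar N) (tvar (S (S N))))
                    (ttimes (tvar (S N)) (tvar (S (S N))))
                    (ttimes (tvar (S N)) (tvar (S (S (S N)))))).
    taut using (H1, H2, H3). }
  apply (qfree_subst_list [(N, a); (S N, b); (S (S N), c); (S (S (S N)), d)]) in H0; auto.
  revert H0; cbn [subst_list fold_left fst snd]; subst_simpl; auto.
Qed.

Lemma le_cong a b c d :
  provable T (fimp (feq a b) (fimp (feq c d) (fimp (fle a c) (fle b d)))).
Proof.
  set (N := S (max_var a + max_var b + max_var c + max_var d)).
  assert (H0 : provable T (fimp (feq (tvar N) (tvar (S N)))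
     (fimp (feq (tvar (S (S N))) (tvar (S (S (S N)))))
     (fimp (fle (tvar N) (tvar (S (S N)))) (fle (tvar (S N)) (tvar (S (S (S N))))))))).
  { assert (H1 := PAx T _ (LEqLe1 N (S N) (S (S N)))).
    assert (H2 := PAx T _ (LEqLe2 (S (S N)) (S (S (S N))) (S N))).
    taut using (H1, H2). }
  apply (qfree_subst_list [(N, a); (S N, b); (S (S N), c); (S (S (S N)), d)]) in H0; auto.
  revert H0; cbn [subst_list fold_left fst snd]; subst_simpl; auto.
Qed.

Lemma eq_cong a b c d :
  provable T (fimp (feq a b) (fimp (feq c d) (fimp (feq a c) (feq b d)))).
Proof.
  assert (H1 := provable_eq_sym a b). assert (H2 := provable_eq_trans b a c).
  assert (H3 := provable_eq_trans b c d). taut using (H1, H2, H3).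
Qed.

Lemma eq_cong_l a b c d :
  provable T (fimp (feq a b) (fimp (feq a c) (fimp (feq b d) (feq c d)))).
Proof.
  assert (H1 := provable_eq_sym a c). assert (H2 := provable_eq_trans c a b).
  assert (H3 := provable_eq_trans c b d). taut using (H1, H2, H3).
Qed.

Lemma term_cong x t s : provable T (fimp (feq (tvar x) t) (feq s (subst_term x t s))).
Proof.
  induction s; simpl.
  - destruct (Nat.eqb n x) eqn:E.
    + apply Nat.eqb_eq in E; subst. apply imp_refl.
    + assert (H := provable_eq_refl (tvar n)). taut using H.
  - assert (H := provable_eq_refl tzero). taut using H.
  - assert (H := succ_cong s (subst_term x t s)). taut using (IHs, H).
  - assert (H := plus_cong s1 (subst_term x t s1) s2 (subst_term x t s2)).
    taut using (IHs1, IHs2, H).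
  - assert (H := times_cong s1 (subst_term x t s1) s2 (subst_term x t s2)).
    taut using (IHs1, IHs2, H).
Qed.

Lemma leibniz x t f : closed_term t ->
  provable T (fimp (feq (tvar x) t) (fiff f (subst x t f))).
Proof.
  intros Ht; induction f; simpl.
  - assert (H1 := term_cong x t t0). assert (H2 := term_cong x t t1).
    assert (H3 := eq_cong t0 (subst_term x t t0) t1 (subst_term x t t1)).
    assert (H4 := eq_cong (subst_term x t t0) t0 (subst_term x t t1) t1).
    assert (H5 := provable_eq_sym t0 (subst_term x t t0)).
    assert (H6 := provable_eq_sym t1 (subst_term x t t1)).
    taut using (H1, H2, H3, H4, H5, H6).
  - assert (H1 := term_cong x t t0). assert (H2 := term_cong x t t1).
    assert (H3 := le_cong t0 (subst_term x t t0) t1 (subst_term x t t1)).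
    assert (H4 := le_cong (subst_term x t t0) t0 (subst_term x t t1) t1).
    assert (H5 := provable_eq_sym t0 (subst_term x t t0)).
    assert (H6 := provable_eq_sym t1 (subst_term x t t1)).
    taut using (H1, H2, H3, H4, H5, H6).
  - taut using IHf.
  - taut using (IHf1, IHf2).
  - destruct (Nat.eqb n x) eqn:E; [taut|].
    assert (Hn : free_in n (feq (tvar x) t) = false) by (simpl; rewrite Nat.eqb_sym, E, Ht; auto).
    assert (H1 : provable T (fimp (fand (feq (tvar x) t) (fall n f)) (fall n (subst x t f)))).
    { apply all_intro; [simpl in Hn |- *; rewrite Hn, Nat.eqb_refl; auto|].
      assert (H2 := all_elim n f). taut using (H2, IHf). }
    assert (H3 : provable T (fimp (fand (feq (tvar x) t) (fall n (subst x t f))) (fall n f))).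
    { apply all_intro; [simpl in Hn |- *; rewrite Hn, Nat.eqb_refl; auto|].
      assert (H2 := all_elim n (subst x t f)). taut using (H2, IHf). }
    taut using (H1, H3).
Qed.

End Quantifiers.

(** * Arithmetic of numerals in [I Delta_0] *)

Fixpoint disj (l : list formula) : formula :=
  match l with [] => fbot | a :: l' => fdisj a (disj l') end.

Definition eq_numerals (v : term) (j k : nat) : list formula :=
  map (fun i => feq v (numeral i)) (seq j k).

Lemma subst_disj_eq_numerals x t j k :
  subst x t (disj (eq_numerals (tvar x) j k)) = disj (eq_numerals t j k).
Proof.
  revert j; induction k; intros j; simpl; auto.
  rewrite Nat.eqb_refl, subst_term_not_occurs by apply closed_numeral.
  specialize (IHk (S j)). unfold eq_numerals in IHk. rewrite IHk. reflexivity.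
Qed.

Lemma free_in_disj_eq_numerals y t j k :
  occurs_term y t = false -> free_in y (disj (eq_numerals t j k)) = false.
Proof.
  intros H; revert j; induction k; intros j; simpl; auto.
  rewrite H, closed_numeral. specialize (IHk (S j)). unfold eq_numerals in IHk.
  rewrite IHk. auto.
Qed.

Lemma qfree_disj_eq_numerals t j k : qfree (disj (eq_numerals t j k)) = true.
Proof.
  revert j; induction k; intros j; simpl; auto.
  specialize (IHk (S j)). unfold eq_numerals in IHk. rewrite IHk. auto.
Qed.

Ltac disj_simpl := unfold eq_numerals, v0, v1, v2 in *; cbn [disj map seq numeral] in *.

Definition zero_or_succ (x y : nat) : formula :=
  fdisj (feq (tvar x) tzero)
        (fneg (fall y (fimp (fle (tvar y) (tvar x)) (fneg (feq (tvar x) (tsucc (tvar y))))))).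

Definition zero_env : nat -> nat := fun _ => 0.

Section Arithmetic.
Variable T : formula -> Prop.
Hypothesis HB : forall f, IDelta0_axiom f -> provable T f.

Ltac axiom_inst ax a b :=
  let N := constr:(S (S (max_var a + max_var b))) in
  let H := fresh in
  assert (H := qfree_subst_list T [(0, tvar N); (1, tvar (S N)); (N, a); (S N, b)] _
                 (HB _ ax) eq_refl);
  revert H; cbn [subst_list fold_left fst snd]; unfold v0, v1; subst_simpl; auto.

Lemma succ_ne_zero a : provable T (fneg (feq (tsucc a) tzero)).
Proof. exact (qfree_inst T 0 a _ (HB _ B1) eq_refl). Qed.

Lemma succ_inj a b : provable T (fimp (feq (tsucc a) (tsucc b)) (feq a b)).
Proof. axiom_inst B2 a b. Qed.

Lemma plus_zero a : provable T (feq (tplus a tzero) a).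
Proof. exact (qfree_inst T 0 a _ (HB _ B3) eq_refl). Qed.

Lemma plus_succ a b : provable T (feq (tplus a (tsucc b)) (tsucc (tplus a b))).
Proof. axiom_inst B4 a b. Qed.

Lemma times_zero a : provable T (feq (ttimes a tzero) tzero).
Proof. exact (qfree_inst T 0 a _ (HB _ B5) eq_refl). Qed.

Lemma times_succ a b : provable T (feq (ttimes a (tsucc b)) (tplus (ttimes a b) a)).
Proof. axiom_inst B6 a b. Qed.

Lemma le_iff_ex_plus a b :
  occurs_term 2 a = false -> occurs_term 2 b = false -> occurs_term 1 a = false ->
  provable T (fiff (fle a b) (fex 2 (feq (tplus v2 a) b))).
Proof.
  intros H2a H2b H1a.
  set (F := fiff (fle v0 v1) (fex 2 (feq (tplus v2 v0) v1))).
  assert (H := HB _ B7). fold F in H.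
  assert (Hf1 : free_for a 0 F = true) by (simpl; rewrite H2a; auto).
  assert (H' := provable_inst T 0 a F Hf1 (PGen _ 0 _ H)).
  set (F' := subst 0 a F) in H'.
  assert (Hf2 : free_for b 1 F' = true) by (subst F'; simpl; rewrite H2b, orb_true_r; auto).
  assert (H'' := provable_inst T 1 b F' Hf2 (PGen _ 1 _ H')).
  revert H''. subst F' F. unfold v0, v1, v2. cbn [subst subst_term fiff fand fex Nat.eqb].
  rewrite (subst_term_not_occurs 1 b a H1a). auto.
Qed.

Lemma eq_trans_rule a b c : provable T (feq a b) -> provable T (feq b c) -> provable T (feq a c).
Proof. intros H1 H2. assert (H3 := provable_eq_trans T a b c). taut using (H1, H2, H3). Qed.

Lemma plus_numeral_iter z n : provable T (feq (tplus z (numeral n)) (iter_succ n z)).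
Proof.
  induction n; simpl.
  - apply plus_zero.
  - assert (H1 := plus_succ z (numeral n)).
    assert (H2 := succ_cong T (tplus z (numeral n)) (iter_succ n z)).
    eapply eq_trans_rule; [exact H1| exact (PMP _ _ _ IHn H2)].
Qed.

Lemma plus_numerals a n : provable T (feq (tplus (numeral a) (numeral n)) (numeral (a + n))).
Proof. rewrite Nat.add_comm, <- iter_succ_numeral. apply plus_numeral_iter. Qed.

Lemma times_numerals a n : provable T (feq (ttimes (numeral a) (numeral n)) (numeral (a * n))).
Proof.
  induction n; simpl.
  - rewrite Nat.mul_0_r. apply times_zero.
  - assert (H1 := times_succ (numeral a) (numeral n)).
    assert (H2 := plus_cong T (ttimes (numeral a) (numeral n)) (numeral (a * n))
                    (numeral a) (numeral a)).
    assert (H3 : provable T (feq (tplus (ttimes (numeral a) (numeral n)) (numeral a))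
                                 (tplus (numeral (a * n)) (numeral a))))
      by taut using (IHn, provable_eq_refl T (numeral a), H2).
    replace (a * S n) with (a * n + a) by lia.
    eapply eq_trans_rule; [exact H1|]. eapply eq_trans_rule; [exact H3| apply plus_numerals].
Qed.

Lemma closed_term_eq_numeral t : closed_term t -> provable T (feq t (numeral (eval zero_env t))).
Proof.
  induction t; simpl; intros Ht.
  - specialize (Ht n); simpl in Ht; rewrite Nat.eqb_refl in Ht; discriminate.
  - apply provable_eq_refl.
  - exact (PMP _ _ _ (IHt Ht) (succ_cong T t _)).
  - assert (Ht1 : closed_term t1) by (intro i; specialize (Ht i); simpl in Ht; apply orb_false_iff in Ht; tauto).
    assert (Ht2 : closed_term t2) by (intro i; specialize (Ht i); simpl in Ht; apply orb_false_iff in Ht; tauto).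
    assert (H := plus_cong T t1 (numeral (eval zero_env t1)) t2 (numeral (eval zero_env t2))).
    eapply eq_trans_rule; [exact (PMP _ _ _ (IHt2 Ht2) (PMP _ _ _ (IHt1 Ht1) H))| apply plus_numerals].
  - assert (Ht1 : closed_term t1) by (intro i; specialize (Ht i); simpl in Ht; apply orb_false_iff in Ht; tauto).
    assert (Ht2 : closed_term t2) by (intro i; specialize (Ht i); simpl in Ht; apply orb_false_iff in Ht; tauto).
    assert (H := times_cong T t1 (numeral (eval zero_env t1)) t2 (numeral (eval zero_env t2))).
    eapply eq_trans_rule; [exact (PMP _ _ _ (IHt2 Ht2) (PMP _ _ _ (IHt1 Ht1) H))| apply times_numerals].
Qed.

Lemma iter_succ_ne_numeral z : forall m n, m < n -> provable T (fneg (feq (iter_succ n z) (numeral m))).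
Proof.
  induction m; intros n Hn; destruct n; try lia; simpl.
  - apply succ_ne_zero.
  - assert (H1 := succ_inj (iter_succ n z) (numeral m)).
    assert (H2 := IHm n ltac:(lia)). taut using (H1, H2).
Qed.

Lemma numerals_ne n m : n <> m -> provable T (fneg (feq (numeral n) (numeral m))).
Proof.
  intros H. destruct (proj1 (Nat.lt_gt_cases n m) H) as [H1|H1];
    [|rewrite numeral_iter_succ; apply iter_succ_ne_numeral; lia].
  assert (H2 := iter_succ_ne_numeral tzero n m H1). rewrite <- numeral_iter_succ in H2.
  assert (H3 := provable_eq_sym T (numeral n) (numeral m)). taut using (H2, H3).
Qed.

Lemma numerals_le n m : n <= m -> provable T (fle (numeral n) (numeral m)).
Proof.
  intros H.
  assert (H1 := le_iff_ex_plus (numeral n) (numeral m)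
                  (closed_numeral _ _) (closed_numeral _ _) (closed_numeral _ _)).
  assert (H2 := ex_intro T 2 (numeral (m - n)) (feq (tplus v2 (numeral n)) (numeral m)) eq_refl).
  revert H2; unfold v2; subst_simpl; intros H2.
  assert (H3 := plus_numerals (m - n) n). replace (m - n + n) with m in H3 by lia.
  taut using (H1, H2, H3).
Qed.

Lemma numerals_not_le n m : m < n -> provable T (fneg (fle (numeral n) (numeral m))).
Proof.
  intros H.
  assert (H1 := le_iff_ex_plus (numeral n) (numeral m)
                  (closed_numeral _ _) (closed_numeral _ _) (closed_numeral _ _)).
  assert (H2 : provable T (fimp (feq (tplus v2 (numeral n)) (numeral m)) fbot)).
  { assert (H3 := plus_numeral_iter v2 n). assert (H4 := iter_succ_ne_numeral v2 m n H).
    assert (H5 := eq_cong T (tplus v2 (numeral n)) (iter_succ n v2) (numeral m) (numeral m)).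
    assert (H6 := provable_eq_refl T (numeral m)). taut using (H3, H4, H5, H6). }
  apply (ex_elim T 2) in H2; [|simpl; auto].
  assert (H7 := provable_eq_refl T tzero). unfold fbot in *. taut using (H1, H2, H7).
Qed.

Lemma one_plus : provable T (feq (tplus (tsucc tzero) v0) (tsucc v0)).
Proof.
  assert (H := HB _ (Ind 0 (feq (tplus (tsucc tzero) v0) (tsucc v0)) (D0eq _ _))).
  unfold v0 in *; cbn [subst subst_term Nat.eqb] in H.
  assert (Hb := plus_zero (tsucc tzero)).
  assert (H1 := plus_succ (tsucc tzero) (tvar 0)).
  assert (H2 := succ_cong T (tplus (tsucc tzero) (tvar 0)) (tsucc (tvar 0))).
  assert (H3 := provable_eq_trans T (tplus (tsucc tzero) (tsucc (tvar 0)))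
                  (tsucc (tplus (tsucc tzero) (tvar 0))) (tsucc (tsucc (tvar 0)))).
  assert (Hs : provable T (fimp (feq (tplus (tsucc tzero) (tvar 0)) (tsucc (tvar 0)))
                   (feq (tplus (tsucc tzero) (tsucc (tvar 0))) (tsucc (tsucc (tvar 0))))))
    by taut using (H1, H2, H3).
  apply (PGen _ 0) in Hs.
  assert (H5 := all_elim T 0 (feq (tplus (tsucc tzero) (tvar 0)) (tsucc (tvar 0)))).
  taut using (Hb, Hs, H, H5).
Qed.

Lemma le_succ_self : provable T (fle v0 (tsucc v0)).
Proof.
  assert (H1 := le_iff_ex_plus v0 (tsucc v0) eq_refl eq_refl eq_refl).
  assert (H2 := ex_intro T 2 (tsucc tzero) (feq (tplus v2 v0) (tsucc v0)) eq_refl).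
  revert H2; unfold v0, v2; subst_simpl; intros H2.
  taut using (H1, H2, one_plus).
Qed.

(** The only use of [Delta_0] induction. *)
Lemma zero_or_succ_01 : provable T (zero_or_succ 0 1).
Proof.
  assert (H := HB _ (Ind 0 (zero_or_succ 0 1)
     (D0imp _ _ (D0neg _ (D0eq _ _))
        (D0neg _ (D0ball 1 (tvar 0) _ eq_refl (D0neg _ (D0eq _ _))))))).
  assert (Hbase : provable T (subst 0 tzero (zero_or_succ 0 1))).
  { unfold zero_or_succ, fdisj; cbn [subst subst_term Nat.eqb]. taut using (provable_eq_refl T tzero). }
  assert (Hstep : provable T (fimp (zero_or_succ 0 1) (subst 0 (tsucc (tvar 0)) (zero_or_succ 0 1)))).
  { assert (Hs : provable T (fneg (fall 1 (fimp (fle (tvar 1) (tsucc (tvar 0)))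
                     (fneg (feq (tsucc (tvar 0)) (tsucc (tvar 1)))))))).
    { apply (bex_intro T 1 (tvar 0)); [reflexivity| |];
        cbn [subst subst_term Nat.eqb]; [exact le_succ_self| apply provable_eq_refl]. }
    unfold zero_or_succ, fdisj; cbn [subst subst_term Nat.eqb]. taut using Hs. }
  taut using (Hbase, PGen _ 0 _ Hstep, H, all_elim T 0 (zero_or_succ 0 1)).
Qed.

Lemma zero_or_succ_var x : x <> 1 -> provable T (zero_or_succ x 1).
Proof.
  intros Hx. assert (Hf : free_for (tvar x) 0 (zero_or_succ 0 1) = true).
  { unfold zero_or_succ, fdisj. cbn [free_for free_in occurs_term Nat.eqb negb orb andb].
    rewrite (proj2 (Nat.eqb_neq x 1) Hx). reflexivity. }
  exact (provable_inst T 0 (tvar x) _ Hf (PGen _ 0 _ zero_or_succ_01)).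
Qed.

Lemma eq_succ_shift j k : provable T
  (fimp (feq v0 (tsucc v1)) (fimp (disj (eq_numerals v1 j k)) (disj (eq_numerals v0 (S j) k)))).
Proof.
  revert j; induction k; intros j.
  - disj_simpl. taut.
  - assert (IH := IHk (S j)).
    assert (H1 := succ_cong T v1 (numeral j)).
    assert (H2 := provable_eq_trans T v0 (tsucc v1) (tsucc (numeral j))).
    disj_simpl. taut using (IH, H1, H2).
Qed.

(** By induction on [n], splitting on [v0 = 0 \/ v0 = S v1]. *)
Lemma plus_eq_numeral_cases n :
  provable T (fimp (feq (tplus v2 v0) (numeral n)) (disj (eq_numerals v0 0 (S n)))).
Proof.
  assert (Hc := zero_or_succ_var 0 ltac:(lia)). unfold zero_or_succ in Hc.
  assert (E1 := plus_cong T v2 v2 v0 (tsucc v1)).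
  assert (E2 := plus_succ v2 v1).
  assert (Hzero : forall k, provable T (fimp (feq v0 tzero)
                    (fimp (feq (tplus v2 v0) (numeral k)) (disj (eq_numerals v0 0 (S k))))))
    by (intro k; disj_simpl; taut).
  assert (E3 := fun k => eq_cong_l T (tplus v2 v0) (tplus v2 (tsucc v1)) (numeral k) (tsucc (tplus v2 v1))).
  assert (E4 := fun k => provable_eq_sym T (tplus v2 v0) (numeral k)).
  induction n as [|n IHn]; [specialize (Hzero 0); specialize (E3 0); specialize (E4 0)
                           |specialize (Hzero (S n)); specialize (E3 (S n)); specialize (E4 (S n))].
  - assert (Hsucc : provable T (fimp (fle v1 v0) (fimp (feq v0 (tsucc v1))
               (fimp (feq (tplus v2 v0) (numeral 0)) (disj (eq_numerals v0 0 1)))))).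
    { assert (H6 := succ_ne_zero (tplus v2 v1)).
      assert (H7 := provable_eq_sym T tzero (tsucc (tplus v2 v1))).
      disj_simpl. taut using (E1, provable_eq_refl T v2, E2, E3, E4, H6, H7). }
    apply (bex_elim T 1) in Hsucc; [|reflexivity].
    disj_simpl. taut using (Hc, Hzero, Hsucc).
  - assert (IH := qfree_inst T 0 v1 _ IHn ltac:(simpl; apply qfree_disj_eq_numerals)).
    cbn [subst] in IH. unfold v0 in IH. rewrite subst_disj_eq_numerals in IH.
    revert IH; unfold v2; subst_simpl; intros IH.
    assert (Hsucc : provable T (fimp (fle v1 v0) (fimp (feq v0 (tsucc v1))
               (fimp (feq (tplus v2 v0) (numeral (S n))) (disj (eq_numerals v0 0 (S (S n)))))))).
    { assert (H6 := succ_inj (tplus v2 v1) (numeral n)).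
      assert (H7 := provable_eq_sym T (numeral (S n)) (tsucc (tplus v2 v1))).
      assert (H8 := eq_succ_shift 0 (S n)).
      disj_simpl. taut using (E1, provable_eq_refl T v2, E2, E3, E4, H6, H7, H8, IH). }
    apply (bex_elim T 1) in Hsucc;
      [|cbn [free_in occurs_term Nat.eqb orb]; rewrite !closed_numeral, free_in_disj_eq_numerals by reflexivity; reflexivity].
    disj_simpl. taut using (Hc, Hzero, Hsucc).
Qed.

Lemma le_numeral_cases n : provable T (fimp (fle v0 (numeral n)) (disj (eq_numerals v0 0 (S n)))).
Proof.
  assert (H1 := le_iff_ex_plus v0 (numeral n) eq_refl (closed_numeral _ _) eq_refl).
  assert (H2 := plus_eq_numeral_cases n).
  apply (ex_elim T 2) in H2; [|apply free_in_disj_eq_numerals; reflexivity].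
  taut using (H1, H2).
Qed.

Lemma le_numeral_cases_var x n :
  provable T (fimp (fle (tvar x) (numeral n)) (disj (eq_numerals (tvar x) 0 (S n)))).
Proof.
  assert (H := qfree_inst T 0 (tvar x) _ (le_numeral_cases n) ltac:(simpl; apply qfree_disj_eq_numerals)).
  cbn [subst] in H. unfold v0 in H. rewrite subst_disj_eq_numerals in H.
  revert H; subst_simpl; auto.
Qed.

Lemma zero_le_var : provable T (fle tzero v0).
Proof.
  assert (H1 := le_iff_ex_plus tzero v0 eq_refl eq_refl eq_refl).
  assert (H2 := ex_intro T 2 v0 (feq (tplus v2 tzero) v0) eq_refl).
  cbn [subst subst_term Nat.eqb v2 v0] in H2.
  assert (H3 := plus_zero v0). disj_simpl. taut using (H1, H2, H3).
Qed.

Lemma eq_numeral_le i M : i <= M -> provable T (fimp (feq v0 (numeral i)) (fle v0 (numeral M))).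
Proof.
  intros H. assert (H1 := numerals_le i M H).
  assert (H2 := le_cong T (numeral i) v0 (numeral M) (numeral M)).
  assert (H3 := provable_eq_sym T v0 (numeral i)).
  taut using (H1, H2, H3, provable_eq_refl T (numeral M)).
Qed.

Lemma disj_eq_numerals_le j k M :
  j + k <= S M -> provable T (fimp (disj (eq_numerals v0 j k)) (fle v0 (numeral M))).
Proof.
  revert j; induction k; intros j Hj.
  - disj_simpl. unfold fbot. taut using (provable_eq_refl T tzero).
  - assert (H1 := IHk (S j) ltac:(lia)). assert (H2 := eq_numeral_le j M ltac:(lia)).
    unfold eq_numerals in *. cbn [disj map seq] in *. taut using (H1, H2).
Qed.

(** By cases on [v2 = 0 \/ v2 = S v1]. *)
Lemma plus_numeral_eq_le_total m : provable T
  (fimp (feq (tplus v2 (numeral m)) v0)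
        (fdisj (fle v0 (numeral (S m))) (fle (numeral (S m)) v0))).
Proof.
  set (D := fdisj (fle v0 (numeral (S m))) (fle (numeral (S m)) v0)).
  assert (Hc := zero_or_succ_var 2 ltac:(lia)). unfold zero_or_succ in Hc.
  assert (P1 := plus_numeral_iter v2 m).
  assert (Hzero : provable T (fimp (feq (tvar 2) tzero) (fimp (feq (tplus v2 (numeral m)) v0) D))).
  { assert (P2 := term_cong T 2 tzero (iter_succ m v2)).
    rewrite subst_iter_succ in P2. unfold v2 in P2. cbn [subst_term Nat.eqb] in P2.
    rewrite <- numeral_iter_succ in P2.
    assert (P3 := eq_numeral_le m (S m) ltac:(lia)).
    assert (P4 := eq_cong_l T (tplus v2 (numeral m)) (iter_succ m v2) v0 (numeral m)).
    subst D. unfold v2 in *. taut using (P1, P2, P3, P4). }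
  assert (Hsucc : provable T (fimp (fle (tvar 1) (tvar 2)) (fimp (feq (tvar 2) (tsucc (tvar 1)))
                  (fimp (feq (tplus v2 (numeral m)) v0) D)))).
  { assert (Q2 := term_cong T 2 (tsucc (tvar 1)) (iter_succ m v2)).
    rewrite subst_iter_succ in Q2. unfold v2 in Q2. cbn [subst_term Nat.eqb] in Q2.
    rewrite iter_succ_succ in Q2.
    assert (Q3 := plus_numeral_iter (tvar 1) (S m)).
    assert (Q4 := eq_cong_l T (tplus v2 (numeral m)) (iter_succ m v2) v0 (iter_succ (S m) (tvar 1))).
    assert (Q5 := eq_cong_l T (iter_succ (S m) (tvar 1)) v0 (tplus (tvar 1) (numeral (S m))) v0).
    assert (Q6 := provable_eq_sym T (tplus (tvar 1) (numeral (S m))) (iter_succ (S m) (tvar 1))).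
    assert (Q7 := provable_eq_sym T v0 (iter_succ (S m) (tvar 1))).
    assert (Q8 := ex_intro T 2 (tvar 1) (feq (tplus v2 (numeral (S m))) v0) eq_refl).
    revert Q8; unfold v2, v0; subst_simpl; intros Q8.
    assert (Q9 := le_iff_ex_plus (numeral (S m)) v0 (closed_numeral _ _) eq_refl (closed_numeral _ _)).
    subst D. unfold v0, v2 in *.
    taut using (P1, Q2, Q3, Q4, Q5, Q6, Q7, Q8, Q9, provable_eq_refl T (tvar 0)). }
  apply (bex_elim T 1) in Hsucc.
  2: { subst D. cbn [free_in occurs_term Nat.eqb orb fdisj]. rewrite !closed_numeral. reflexivity. }
  taut using (Hc, Hzero, Hsucc).
Qed.

Lemma le_numeral_total m : provable T (fdisj (fle v0 (numeral m)) (fle (numeral m) v0)).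
Proof.
  induction m.
  - disj_simpl. taut using zero_le_var.
  - assert (Hle : provable T (fimp (fle v0 (numeral m)) (fle v0 (numeral (S m))))).
    { exact (imp_trans T _ _ _ (le_numeral_cases m) (disj_eq_numerals_le 0 (S m) (S m) ltac:(lia))). }
    assert (Hge := plus_numeral_eq_le_total m).
    apply (ex_elim T 2) in Hge.
    2: { cbn [free_in occurs_term Nat.eqb orb fdisj]. rewrite !closed_numeral. reflexivity. }
    assert (H7 := le_iff_ex_plus (numeral m) v0 (closed_numeral _ _) eq_refl (closed_numeral _ _)).
    taut using (IHm, Hle, Hge, H7).
Qed.

Lemma le_numeral_total_var x m :
  provable T (fdisj (fle (tvar x) (numeral m)) (fle (numeral m) (tvar x))).
Proof.
  assert (H := qfree_inst T 0 (tvar x) _ (le_numeral_total m) eq_refl).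
  revert H; unfold v0, fdisj; subst_simpl; auto.
Qed.

End Arithmetic.

(** * [Delta_0]-completeness *)

Section Delta0Completeness.
Variable T : formula -> Prop.
Hypothesis HB : forall f, IDelta0_axiom f -> provable T f.

Definition decides (g : formula) : Prop :=
  (sat zero_env g -> provable T g) /\ (~ sat zero_env g -> provable T (fneg g)).

Notation num_of t := (numeral (eval zero_env t)).

Lemma decides_feq u v : closed_term u -> closed_term v -> decides (feq u v).
Proof.
  intros Hu Hv.
  assert (H1 := closed_term_eq_numeral T HB u Hu).
  assert (H2 := closed_term_eq_numeral T HB v Hv).
  split; simpl; intros Hsat.
  - rewrite Hsat in H1.
    assert (H3 := provable_eq_sym T v (num_of v)).
    assert (H4 := provable_eq_trans T u (num_of v) v). taut using (H1, H2, H3, H4).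
  - assert (H3 := numerals_ne T HB _ _ Hsat).
    assert (H4 := eq_cong_l T u v (num_of u) (num_of v)).
    taut using (H1, H2, H3, H4).
Qed.

Lemma decides_fle u v : closed_term u -> closed_term v -> decides (fle u v).
Proof.
  intros Hu Hv.
  assert (H1 := closed_term_eq_numeral T HB u Hu).
  assert (H2 := closed_term_eq_numeral T HB v Hv).
  split; simpl; intros Hsat.
  - assert (H3 := numerals_le T HB _ _ Hsat).
    assert (H4 := le_cong T (num_of u) u (num_of v) v).
    assert (H5 := provable_eq_sym T u (num_of u)).
    assert (H6 := provable_eq_sym T v (num_of v)).
    taut using (H1, H2, H3, H4, H5, H6).
  - assert (H3 := numerals_not_le T HB (eval zero_env u) (eval zero_env v) ltac:(lia)).
    assert (H4 := le_cong T u (num_of u) v (num_of v)).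
    taut using (H1, H2, H3, H4).
Qed.

Lemma decides_fneg g : decides g -> decides (fneg g).
Proof.
  intros [Ht Hf]; split; simpl; intros Hsat; [apply Hf; auto|].
  apply NNPP in Hsat. taut using (Ht Hsat).
Qed.

Lemma decides_fimp g h : decides g -> decides h -> decides (fimp g h).
Proof.
  intros [Ht1 Hf1] [Ht2 Hf2]; split; simpl; intros Hsat.
  - destruct (classic (sat zero_env g)) as [Hg|Hg];
      [taut using (Ht2 (Hsat Hg))| taut using (Hf1 Hg)].
  - assert (Hg : sat zero_env g) by (apply NNPP; intro Hn; apply Hsat; intro; contradiction).
    assert (Hh : ~ sat zero_env h) by (intro Hh; apply Hsat; auto).
    taut using (Ht1 Hg, Hf2 Hh).
Qed.

Lemma disj_eq_numerals_elim x C j k :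
  (forall i, j <= i < j + k -> provable T (fimp (feq (tvar x) (numeral i)) C)) ->
  provable T (fimp (disj (eq_numerals (tvar x) j k)) C).
Proof.
  revert j; induction k; intros j H.
  - simpl. unfold fbot. taut using (provable_eq_refl T tzero).
  - assert (H1 := IHk (S j) ltac:(intros; apply H; lia)). assert (H2 := H j ltac:(lia)).
    unfold eq_numerals in *. cbn [disj map seq] in *. taut using (H1, H2).
Qed.

(** A true bounded universal is proved by splitting [x <= t] into the cases
    [x = 0, ..., x = t]; a false one is refuted by its counterexample. *)
Lemma decides_ball x t h : occurs_term x t = false -> closed_term t ->
  (forall a, decides (subst x (numeral a) h)) ->
  decides (fall x (fimp (fle (tvar x) t) h)).
Proof.
  intros Hxt Ht Hdec.
  set (N := eval zero_env t).
  assert (HtN := closed_term_eq_numeral T HB t Ht). fold N in HtN.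
  assert (Hsem : sat zero_env (fall x (fimp (fle (tvar x) t) h)) <->
                 forall a, a <= N -> sat zero_env (subst x (numeral a) h)).
  { simpl. split; intros H1 a; specialize (H1 a);
      rewrite sat_subst_closed in * by apply closed_numeral; rewrite eval_numeral in *;
      rewrite update_eq, (eval_closed _ zero_env t Ht) in *; auto. }
  split; intros Hsat; rewrite Hsem in Hsat.
  - apply PGen.
    assert (L1 := le_cong T (tvar x) (tvar x) t (numeral N)).
    assert (L2 := le_numeral_cases_var T HB x N).
    assert (L3 : provable T (fimp (disj (eq_numerals (tvar x) 0 (S N))) h)).
    { apply disj_eq_numerals_elim. intros i Hi.
      assert (K := leibniz T x (numeral i) h (closed_numeral i)).
      taut using (proj1 (Hdec i) (Hsat i ltac:(lia)), K). }
    taut using (provable_eq_refl T (tvar x), HtN, L1, L2, L3).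
  - apply not_all_ex_not in Hsat. destruct Hsat as [a Ha].
    apply imply_to_and in Ha. destruct Ha as [Ha1 Ha2].
    assert (K1 := proj2 (Hdec a) Ha2).
    assert (K2 := numerals_le T HB _ _ Ha1).
    assert (K3 := le_cong T (numeral a) (numeral a) (numeral N) t).
    assert (K5 := provable_eq_sym T t (numeral N)).
    assert (K6 := PAx T _ (LA4 x (numeral a) (fimp (fle (tvar x) t) h)
                           (free_for_closed _ _ _ (closed_numeral a)))).
    cbn [subst subst_term] in K6. rewrite Nat.eqb_refl, (subst_term_not_occurs x _ t Hxt) in K6.
    taut using (K1, K2, K3, provable_eq_refl T (numeral a), K5, HtN, K6).
Qed.

Lemma closed_term_of_sentence_ball x t h :
  sentence (fall x (fimp (fle (tvar x) t) h)) -> occurs_term x t = false -> closed_term t.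
Proof.
  intros Hsent Hxt i. destruct (occurs_term i t) eqn:E; auto.
  destruct (Nat.eqb x i) eqn:E2.
  - apply Nat.eqb_eq in E2; subst; congruence.
  - specialize (Hsent i). simpl in Hsent. rewrite E2, E in Hsent. discriminate.
Qed.

Lemma free_in_sentence_ball x t h :
  sentence (fall x (fimp (fle (tvar x) t) h)) -> forall y, free_in y h = true -> y = x.
Proof.
  intros Hsent y Hy. destruct (Nat.eqb x y) eqn:E2; [apply Nat.eqb_eq in E2; auto|].
  specialize (Hsent y). simpl in Hsent. rewrite E2, Hy, !orb_true_r in Hsent. discriminate.
Qed.

Lemma delta0_decides g : delta0 g -> sentence g -> decides g.
Proof.
  remember (fsize g) as n eqn:Hn. revert g Hn.
  induction n as [n IH] using lt_wf_ind; intros g Hn Hd Hsent.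
  assert (Hsplit : forall a b, sentence (fimp a b) -> sentence a /\ sentence b)
    by (intros a b H; split; intro i; specialize (H i); simpl in H; apply orb_false_iff in H; tauto).
  destruct Hd as [u v|u v|g Hg|g h Hg Hh|x t h Hxt Hh]; simpl in Hn.
  - apply decides_feq; intro i; specialize (Hsent i); simpl in Hsent;
      apply orb_false_iff in Hsent; tauto.
  - apply decides_fle; intro i; specialize (Hsent i); simpl in Hsent;
      apply orb_false_iff in Hsent; tauto.
  - apply decides_fneg, (IH (fsize g)); auto; lia.
  - destruct (Hsplit _ _ Hsent).
    apply decides_fimp; [apply (IH (fsize g))| apply (IH (fsize h))]; auto; lia.
  - apply decides_ball; auto; [eapply closed_term_of_sentence_ball; eauto|].
    intros a. apply (IH (fsize h)); [lia| rewrite fsize_subst; auto| |].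
    + apply delta0_subst; auto. apply closed_numeral.
    + apply sentence_subst; [apply closed_numeral| eapply free_in_sentence_ball; eauto].
Qed.

Theorem delta0_complete g : delta0 g -> sentence g -> sat zero_env g -> provable T g.
Proof. intros Hd Hs. exact (proj1 (delta0_decides g Hd Hs)). Qed.

End Delta0Completeness.

(** * Goedel's beta function *)

Definition beta (a b i : nat) : nat := a mod S (S i * b).

Lemma divide_fact g s : 1 <= g <= s -> Nat.divide g (fact s).
Proof.
  induction s; intros H; [lia|].
  simpl fact. destruct (Nat.eq_dec g (S s)).
  - subst. exists (fact s). simpl. lia.
  - replace (fact s + s * fact s) with (S s * fact s) by (simpl; lia).
    apply Nat.divide_mul_r. apply IHs; lia.
Qed.

Lemma le_fact s : s <= fact s.
Proof. induction s; simpl; [lia|]. assert (0 < fact s) by apply lt_O_fact. nia. Qed.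

Lemma gcd_mul_coprime x y z :
  Nat.gcd x z = 1 -> Nat.gcd y z = 1 -> Nat.gcd (x * y) z = 1.
Proof.
  intros H1 H2. set (d := Nat.gcd (x * y) z).
  assert (Hdz : Nat.divide d z) by apply Nat.gcd_divide_r.
  assert (Hdxy : Nat.divide d (x * y)) by apply Nat.gcd_divide_l.
  assert (Hdx : Nat.gcd d x = 1).
  { apply Nat.divide_1_r. rewrite <- H1. apply Nat.gcd_greatest.
    - apply Nat.gcd_divide_r.
    - eapply Nat.divide_trans; [apply Nat.gcd_divide_l| exact Hdz]. }
  assert (Hdy : Nat.divide d y) by (eapply Nat.gauss; eauto).
  apply Nat.divide_1_r. rewrite <- H2. apply Nat.gcd_greatest; auto.
Qed.

Section BetaModuli.
Variable b : nat.

Definition modulus (i : nat) : nat := S (S i * b).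

Lemma gcd_modulus_b i : Nat.gcd (modulus i) b = 1.
Proof.
  apply Nat.divide_1_r.
  assert (H1 : Nat.divide (Nat.gcd (modulus i) b) (modulus i)) by apply Nat.gcd_divide_l.
  assert (H2 : Nat.divide (Nat.gcd (modulus i) b) (S i * b))
    by (apply Nat.divide_mul_r, Nat.gcd_divide_r).
  replace 1 with (modulus i - S i * b) by (unfold modulus; lia).
  apply Nat.divide_sub_r; auto.
Qed.

(** A common divisor of [modulus i] and [modulus j] divides [(j - i) b],
    is coprime to [b], hence divides [j - i <= s], hence divides [b = s!]. *)
Lemma moduli_coprime s i j :
  b = fact s -> i < j -> j <= s -> Nat.gcd (modulus i) (modulus j) = 1.
Proof.
  intros Hb Hij Hjs. set (g := Nat.gcd (modulus i) (modulus j)).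
  assert (Hgi : Nat.divide g (modulus i)) by apply Nat.gcd_divide_l.
  assert (Hgj : Nat.divide g (modulus j)) by apply Nat.gcd_divide_r.
  assert (Hd : Nat.divide g (b * (j - i))).
  { replace (b * (j - i)) with (modulus j - modulus i) by (unfold modulus; nia).
    apply Nat.divide_sub_r; auto. }
  assert (Hgb : Nat.gcd g b = 1).
  { apply Nat.divide_1_r. rewrite <- (gcd_modulus_b i). apply Nat.gcd_greatest.
    - eapply Nat.divide_trans; [apply Nat.gcd_divide_l| exact Hgi].
    - apply Nat.gcd_divide_r. }
  assert (Hg : Nat.divide g (j - i)) by (eapply Nat.gauss; eauto).
  assert (Hg0 : g <> 0) by (intro H0; apply Nat.gcd_eq_0 in H0; unfold modulus in H0; lia).
  assert (Hle : g <= j - i) by (apply Nat.divide_pos_le; auto; lia).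
  assert (Hgf : Nat.divide g b) by (rewrite Hb; apply divide_fact; lia).
  rewrite <- Hgb. symmetry. apply Nat.gcd_unique_alt. intros q; split; intros Hq.
  - split; auto. eapply Nat.divide_trans; eauto.
  - apply Hq.
Qed.

Fixpoint prod_moduli (k : nat) : nat :=
  match k with 0 => 1 | S k' => prod_moduli k' * modulus k' end.

Lemma prod_moduli_pos k : 0 < prod_moduli k.
Proof. induction k; simpl; [lia|]. unfold modulus. nia. Qed.

Lemma modulus_divide_prod i k : i < k -> Nat.divide (modulus i) (prod_moduli k).
Proof.
  induction k; intros H; [lia|]. simpl. destruct (Nat.eq_dec i k).
  - subst. apply Nat.divide_mul_r, Nat.divide_refl.
  - apply Nat.divide_mul_l. apply IHk; lia.
Qed.

Lemma prod_moduli_coprime s k j :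
  b = fact s -> k <= j -> j <= s -> Nat.gcd (prod_moduli k) (modulus j) = 1.
Proof.
  intros Hb Hk Hj. induction k; simpl; [reflexivity|].
  apply gcd_mul_coprime; [apply IHk; lia| apply (moduli_coprime s); auto; lia].
Qed.

Lemma chinese_remainder (l : nat -> nat) s k :
  b = fact s -> k <= S s -> (forall i, i < k -> l i < modulus i) ->
  exists a, forall i, i < k -> a mod (modulus i) = l i.
Proof.
  intros Hb. induction k; intros Hk Hl; [exists 0; intros; lia|].
  destruct IHk as [a Ha]; [lia| intros; apply Hl; lia|].
  set (P := prod_moduli k). set (m := modulus k).
  assert (HP : 0 < P) by apply prod_moduli_pos.
  destruct (Nat.gcd_bezout_pos P m HP) as [u [v Huv]].
  assert (Hg : Nat.gcd P m = 1) by (apply (prod_moduli_coprime s k k); auto; lia).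
  rewrite Hg in Huv.
  set (c := l k + m * a - a).
  exists (a + u * c * P). intros i Hi.
  destruct (Nat.eq_dec i k).
  - subst i. fold m.
    assert (Hm : 0 < m) by (unfold m, modulus; lia).
    replace (a + u * c * P) with ((a + c) + (c * v) * m)
      by (rewrite <- Nat.mul_assoc, (Nat.mul_comm u c), <- Nat.mul_assoc, Huv; nia).
    rewrite Nat.Div0.mod_add.
    replace (a + c) with (l k + a * m) by (unfold c; nia).
    rewrite Nat.Div0.mod_add. apply Nat.mod_small. apply Hl; lia.
  - destruct (modulus_divide_prod i k ltac:(lia)) as [q Hq]. fold P in Hq.
    replace (a + u * c * P) with (a + (u * c * q) * modulus i) by (rewrite Hq; nia).
    rewrite Nat.Div0.mod_add. apply Ha; lia.
Qed.

End BetaModuli.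

Lemma beta_exists (l : list nat) :
  exists a b, forall i, i < length l -> beta a b i = nth i l 0.
Proof.
  set (s := S (length l + list_max l)).
  assert (Hl : forall i, i < length l -> nth i l 0 < modulus (fact s) i).
  { intros i Hi.
    assert (H1 := proj1 (list_max_le l (list_max l)) (le_n _)).
    rewrite Forall_forall in H1. specialize (H1 _ (nth_In l 0 Hi)).
    assert (H2 := le_fact s). unfold modulus. subst s. nia. }
  destruct (chinese_remainder (fact s) (fun i => nth i l 0) s (length l) eq_refl ltac:(lia) Hl)
    as [a Ha].
  exists a, (fact s). intros i Hi. apply Ha; auto.
Qed.

Lemma beta_exists_fun (f : nat -> nat) k : exists a b, forall i, i <= k -> beta a b i = f i.
Proof.
  destruct (beta_exists (map f (seq 0 (S k)))) as [a [b Hab]].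
  exists a, b. intros i Hi. rewrite Hab by (rewrite length_map, length_seq; lia).
  rewrite nth_indep with (d' := f 0) by (rewrite length_map, length_seq; lia).
  rewrite map_nth, seq_nth by lia. auto.
Qed.

(** * Bounded formulas with beta and Cantor pairing *)

Definition bex (x : nat) (t : term) (g : formula) : formula :=
  fneg (fall x (fimp (fle (tvar x) t) (fneg g))).
Definition ball (x : nat) (t : term) (g : formula) : formula :=
  fall x (fimp (fle (tvar x) t) g).
Definition flt (a b : term) : formula := fle (tsucc a) b.
Definition beta_modulus (ti tb : term) : term := tsucc (ttimes (tsucc ti) tb).

(** [tr = beta ta tb ti]; the quotient is the bound variable [v_35]. *)
Definition beta_formula (ta tb ti tr : term) : formula :=
  bex 35 ta (fand (feq ta (tplus (ttimes (tvar 35) (beta_modulus ti tb)) tr))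
                  (flt tr (beta_modulus ti tb))).

(** [tp = cantor ta tb], written without division. *)
Definition pair_formula (tp ta tb : term) : formula :=
  feq (tplus tp tp) (tplus (tplus (ttimes (tplus ta tb) (tsucc (tplus ta tb))) ta) ta).

Definition odd_term (tp : term) : term := tsucc (tplus tp tp).

Lemma sat_bex e x t g : occurs_term x t = false ->
  (sat e (bex x t g) <-> exists a, a <= eval e t /\ sat (update e x a) g).
Proof.
  intros H; unfold bex; simpl. split.
  - intros H1. apply NNPP. intros H2. apply H1. intros a H3 H4. apply H2. exists a.
    rewrite update_eq, eval_update_not_occurs in H3; auto.
  - intros [a [H1 H2]] H3. apply (H3 a); auto. rewrite update_eq, eval_update_not_occurs; auto.
Qed.

Lemma sat_ball e x t g : occurs_term x t = false ->
  (sat e (ball x t g) <-> forall a, a <= eval e t -> sat (update e x a) g).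
Proof.
  intros H; unfold ball; simpl. split; intros H1 a; specialize (H1 a);
  rewrite update_eq, eval_update_not_occurs in *; auto.
Qed.

Lemma sat_beta_formula e ta tb ti tr :
  occurs_term 35 ta = false -> occurs_term 35 tb = false ->
  occurs_term 35 ti = false -> occurs_term 35 tr = false ->
  (sat e (beta_formula ta tb ti tr) <-> eval e tr = beta (eval e ta) (eval e tb) (eval e ti)).
Proof.
  intros H1 H2 H3 H4. unfold beta_formula. rewrite sat_bex by auto. unfold beta.
  set (a := eval e ta). set (m := S (S (eval e ti) * eval e tb)).
  split.
  - intros [q [Hq Hs]]. rewrite sat_fand in Hs. cbn [sat eval beta_modulus flt] in Hs.
    rewrite !eval_update_not_occurs, update_eq in Hs by auto.
    apply (Nat.mod_unique a m q); [unfold m; simpl; lia|]. unfold a, m. simpl. lia.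
  - intros Hr. exists (a / m). split.
    + apply Nat.Div0.div_le_upper_bound. unfold m. nia.
    + rewrite sat_fand. cbn [sat eval beta_modulus flt].
      rewrite !eval_update_not_occurs, update_eq by auto. fold a. rewrite Hr.
      assert (K1 := Nat.div_mod a m ltac:(unfold m; lia)).
      assert (K2 := Nat.mod_upper_bound a m ltac:(unfold m; lia)).
      unfold m in *. simpl in *. split; lia.
Qed.

Lemma even_mul_succ s : exists h, s * S s = 2 * h.
Proof. induction s; [exists 0; lia|]. destruct IHs as [h Hh]. exists (h + S s). nia. Qed.

Lemma sat_pair_formula e tp ta tb :
  sat e (pair_formula tp ta tb) <-> eval e tp = cantor (eval e ta) (eval e tb).
Proof.
  unfold pair_formula, cantor; cbn [sat eval].
  set (a := eval e ta). set (b := eval e tb).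
  destruct (even_mul_succ (a + b)) as [h Hh].
  replace ((a + b) * (a + b + 1)) with (2 * h) by (rewrite <- Hh; f_equal; lia).
  rewrite (Nat.mul_comm 2 h), Nat.div_mul by lia. lia.
Qed.

Inductive bformula : Type :=
| BEq (t u : term) | BLe (t u : term) | BAnd (a b : bformula) | BImp (a b : bformula)
| BEx (x : nat) (t : term) (g : bformula) | BAll (x : nat) (t : term) (g : bformula)
| BBeta (ta tb ti tr : term) | BPair (tp ta tb : term).

Fixpoint bto_formula (g : bformula) : formula :=
  match g with
  | BEq t u => feq t u
  | BLe t u => fle t u
  | BAnd a b => fand (bto_formula a) (bto_formula b)
  | BImp a b => fimp (bto_formula a) (bto_formula b)
  | BEx x t g => bex x t (bto_formula g)
  | BAll x t g => ball x t (bto_formula g)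
  | BBeta ta tb ti tr => beta_formula ta tb ti tr
  | BPair tp ta tb => pair_formula tp ta tb
  end.

Fixpoint bsat (e : nat -> nat) (g : bformula) : Prop :=
  match g with
  | BEq t u => eval e t = eval e u
  | BLe t u => eval e t <= eval e u
  | BAnd a b => bsat e a /\ bsat e b
  | BImp a b => bsat e a -> bsat e b
  | BEx x t g => exists a, a <= eval e t /\ bsat (update e x a) g
  | BAll x t g => forall a, a <= eval e t -> bsat (update e x a) g
  | BBeta ta tb ti tr => eval e tr = beta (eval e ta) (eval e tb) (eval e ti)
  | BPair tp ta tb => eval e tp = cantor (eval e ta) (eval e tb)
  end.

(** [v_35] is reserved for the quotient in [BBeta]. *)
Fixpoint bwf (g : bformula) : bool :=
  match g with
  | BEq _ _ | BLe _ _ | BPair _ _ _ => true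
  | BAnd a b | BImp a b => bwf a && bwf b
  | BEx x t g | BAll x t g => negb (occurs_term x t) && bwf g
  | BBeta ta tb ti tr =>
      negb (occurs_term 35 ta || occurs_term 35 tb || occurs_term 35 ti || occurs_term 35 tr)
  end.

Lemma sat_bto_formula g : bwf g = true -> forall e, sat e (bto_formula g) <-> bsat e g.
Proof.
  induction g; cbn [bto_formula bsat bwf]; intros Hw e; try (simpl; tauto).
  - apply andb_true_iff in Hw; destruct Hw. rewrite sat_fand, IHg1, IHg2; auto. tauto.
  - apply andb_true_iff in Hw; destruct Hw. simpl. rewrite IHg1, IHg2; auto. tauto.
  - apply andb_true_iff in Hw; destruct Hw as [H1 H2]. apply negb_true_iff in H1.
    rewrite sat_bex by auto. split; intros [a [Ha Hs]]; exists a; split; auto; apply IHg; auto.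
  - apply andb_true_iff in Hw; destruct Hw as [H1 H2]. apply negb_true_iff in H1.
    rewrite sat_ball by auto. split; intros Hs a Ha; apply IHg; auto.
  - apply negb_true_iff in Hw. rewrite !orb_false_iff in Hw. apply sat_beta_formula; tauto.
  - apply sat_pair_formula.
Qed.

Lemma delta0_bto_formula g : bwf g = true -> delta0 (bto_formula g).
Proof.
  induction g; cbn [bto_formula bwf]; intros Hw;
    try (apply andb_true_iff in Hw; destruct Hw as [H1 H2]).
  - constructor.
  - constructor.
  - apply D0neg, D0imp; [auto| apply D0neg; auto].
  - apply D0imp; auto.
  - apply negb_true_iff in H1. apply D0neg, D0ball; [auto| apply D0neg; auto].
  - apply negb_true_iff in H1. apply D0ball; auto.
  - apply negb_true_iff in Hw. rewrite !orb_false_iff in Hw.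
    apply D0neg, D0ball; [tauto| repeat constructor].
  - constructor.
Qed.

(** * The diagonal function and its [Delta_0] graph *)

(** [Seq_Z] puts [F_(2<a,i>+1)] at position [i] for the symbol code [a]. *)
Definition fib_index (a i : nat) : nat := S (cantor a i + cantor a i).

(** The contribution to [Seq_Z] of [k] successor symbols from position [L] on. *)
Fixpoint succ_block_code (cS L k : nat) : nat :=
  match k with 0 => 0 | S k' => succ_block_code cS L k' + fibZ (fib_index cS (L + k')) end.

(** [u = d(N)], for the symbol codes [K] of [v_0], [cS] of [S] and [c0] of [0]. *)
Definition diag_rel (K cS c0 N u : nat) : Prop :=
  exists n L, N = (n + L) * (n + L) + L /\
    u + fibZ (fib_index K L) = n + succ_block_code cS L N + fibZ (fib_index c0 (L + N)).

Lemma square_pair_inj n L n' L' :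
  (n + L) * (n + L) + L = (n' + L') * (n' + L') + L' -> n = n' /\ L = L'.
Proof. intros H. assert (Hs : n + L = n' + L') by nia. rewrite Hs in H. lia. Qed.

Lemma diag_rel_functional K cS c0 N u u' :
  diag_rel K cS c0 N u -> diag_rel K cS c0 N u' -> u = u'.
Proof.
  intros [n [L [H1 H2]]] [n' [L' [H1' H2']]]. rewrite H1 in H1'.
  apply square_pair_inj in H1'. destruct H1'; subst. lia.
Qed.

Lemma cantor_mono_r a b b' : b <= b' -> cantor a b <= cantor a b'.
Proof.
  intros H. unfold cantor.
  assert ((a + b) * (a + b + 1) <= (a + b') * (a + b' + 1)) by nia.
  assert (K := Nat.Div0.div_le_mono _ _ 2 H0). lia.
Qed.

(** [diag_bgraph K cS c0 N u w]: [u <= w] and [u = d(N)], with all witnesses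
    bounded by [w]: [beta a1 b1] lists [F_0, ..., F_M], and [beta a2 b2 j] is
    [succ_block_code cS L j] for [j <= N].  Its bound variables are [20..35]. *)
Definition diag_bgraph (K cS c0 N u w : term) : bformula :=
  let n := tvar 20 in let L := tvar 21 in let a1 := tvar 22 in let b1 := tvar 23 in
  let a2 := tvar 24 in let b2 := tvar 25 in let M := tvar 26 in let i := tvar 27 in
  let j := tvar 28 in let P := tvar 29 in let P1 := tvar 30 in let P2 := tvar 31 in
  let r1 := tvar 32 in let r2 := tvar 33 in let r3 := tvar 34 in
  let EQN := BEq N (tplus (ttimes (tplus n L) (tplus n L)) L) in
  let FIB0 := BBeta a1 b1 tzero (tsucc tzero) in
  let FIB1 := BBeta a1 b1 (tsucc tzero) (tsucc tzero) in
  let FIBREC := BAll 27 M (BImp (BLe (tsucc (tsucc i)) M)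
        (BEx 32 w (BEx 33 w (BEx 34 w
          (BAnd (BBeta a1 b1 i r1) (BAnd (BBeta a1 b1 (tsucc i) r2)
          (BAnd (BBeta a1 b1 (tsucc (tsucc i)) r3) (BEq r3 (tplus r2 r1))))))))) in
  let SUM0 := BBeta a2 b2 tzero tzero in
  let SUMREC := BAll 28 N (BImp (BLe (tsucc j) N)
        (BEx 29 w (BAnd (BPair P cS (tplus L j)) (BAnd (BLe (odd_term P) M)
          (BEx 32 w (BEx 33 w (BEx 34 w
            (BAnd (BBeta a2 b2 j r1) (BAnd (BBeta a2 b2 (tsucc j) r2)
            (BAnd (BBeta a1 b1 (odd_term P) r3) (BEq r2 (tplus r1 r3)))))))))))) in
  let FINAL := BEx 30 w (BEx 31 w (BAnd (BPair P1 K L) (BAnd (BPair P2 c0 (tplus L N))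
    (BAnd (BLe (odd_term P1) M) (BAnd (BLe (odd_term P2) M)
    (BEx 32 w (BEx 33 w (BEx 34 w
      (BAnd (BBeta a1 b1 (odd_term P1) r1) (BAnd (BBeta a2 b2 N r2)
      (BAnd (BBeta a1 b1 (odd_term P2) r3) (BEq (tplus u r1) (tplus (tplus n r2) r3))))))))))))) in
  BAnd (BLe u w) (BEx 20 w (BEx 21 w (BEx 22 w (BEx 23 w (BEx 24 w (BEx 25 w (BEx 26 w
  (BAnd EQN (BAnd FIB0 (BAnd FIB1 (BAnd FIBREC (BAnd SUM0 (BAnd SUMREC FINAL))))))))))))).

Definition diag_bgraph_generic : bformula :=
  diag_bgraph (tvar 40) (tvar 41) (tvar 42) (tvar 43) (tvar 44) (tvar 45).

Lemma diag_bgraph_sound e : bsat e diag_bgraph_generic ->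
  e 44 <= e 45 /\ diag_rel (e 40) (e 41) (e 42) (e 43) (e 44).
Proof.
  cbn [bsat diag_bgraph_generic diag_bgraph eval update Nat.eqb odd_term].
  intros [Hu [n [_ [L [_ [a1 [_ [b1 [_ [a2 [_ [b2 [_ [M [_
           [HN [F0 [F1 [FR [S0 [SR FIN]]]]]]]]]]]]]]]]]]]]].
  split; [exact Hu|]. exists n, L. split; auto.
  assert (Hfib : forall i, i <= M -> beta a1 b1 i = fibZ i /\
                   (S i <= M -> beta a1 b1 (S i) = fibZ (S i))).
  { induction i; intros Hi; [split; auto|].
    destruct (IHi ltac:(lia)) as [H3 H2]. split; [apply H2; lia|]. intros Hi2.
    destruct (FR i ltac:(lia) Hi2) as [r1 [_ [r2 [_ [r3 [_ [E1 [E2 [E3 E4]]]]]]]]].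
    rewrite <- E3, E4, E1, E2, H3, H2 by lia. simpl. lia. }
  assert (Hsum : forall j, j <= e 43 -> beta a2 b2 j = succ_block_code (e 41) L j).
  { induction j; intros Hj; auto.
    destruct (SR j ltac:(lia) Hj) as [P [_ [EP [HP [r1 [_ [r2 [_ [r3 [_ [E1 [E2 [E3 E4]]]]]]]]]]]]].
    simpl. rewrite <- E2, E4, E1, E3, IHj by lia.
    rewrite (proj1 (Hfib _ HP)). unfold fib_index. rewrite <- EP. auto. }
  destruct FIN as [P1 [_ [P2 [_ [EP1 [EP2 [HP1 [HP2
                   [r1 [_ [r2 [_ [r3 [_ [E1 [E2 [E3 E4]]]]]]]]]]]]]]]]].
  rewrite E1, E2, E3, (proj1 (Hfib _ HP1)), (proj1 (Hfib _ HP2)), Hsum in E4 by lia.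
  unfold fib_index. rewrite <- EP1, <- EP2. lia.
Qed.

Ltac witness t := exists t; split; [first [solve [auto] | unfold fib_index in *; lia]|].

(** The Fibonacci numbers and partial sums are coded by [beta_exists_fun]; the
    bound [w] is the sum of everything in sight. *)
Lemma diag_bgraph_complete K cS c0 N u : diag_rel K cS c0 N u ->
  exists w, forall e, e 40 = K -> e 41 = cS -> e 42 = c0 -> e 43 = N -> e 44 = u ->
    e 45 = w -> bsat e diag_bgraph_generic.
Proof.
  intros [n [L [HNdef Heq]]].
  set (M := fib_index K L + fib_index c0 (L + N) + fib_index cS (L + N)).
  destruct (beta_exists_fun fibZ M) as [a1 [b1 Hf]].
  destruct (beta_exists_fun (succ_block_code cS L) N) as [a2 [b2 Hs]].
  set (w := u + n + L + a1 + b1 + a2 + b2 + M + N).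
  assert (Hw1 : forall i, beta a1 b1 i <= w)
    by (intros i; assert (H := Nat.Div0.mod_le a1 (S (S i * b1))); unfold beta, w; lia).
  assert (Hw2 : forall i, beta a2 b2 i <= w)
    by (intros i; assert (H := Nat.Div0.mod_le a2 (S (S i * b2))); unfold beta, w; lia).
  exists w. intros e E40 E41 E42 E43 E44 E45.
  cbn [bsat diag_bgraph_generic diag_bgraph eval update Nat.eqb odd_term].
  rewrite E40, E41, E42, E43, E44, E45.
  split; [unfold w; lia|].
  witness n. witness L. witness a1. witness b1. witness a2. witness b2. witness M.
  split; [auto|].
  split; [rewrite Hf by (unfold M, fib_index; lia); auto|].
  split; [rewrite Hf by (unfold M, fib_index; lia); auto|].
  split.
  { intros i Hi Hi2.
    witness (beta a1 b1 i). witness (beta a1 b1 (S i)). witness (beta a1 b1 (S (S i))).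
    repeat split; auto. rewrite !Hf by lia. simpl. lia. }
  split; [rewrite Hs by lia; auto|].
  split.
  { intros j Hj Hj2.
    assert (Hc : cantor cS (L + j) <= cantor cS (L + N)) by (apply cantor_mono_r; lia).
    witness (cantor cS (L + j)). split; auto. split; [unfold M, fib_index; lia|].
    witness (beta a2 b2 j). witness (beta a2 b2 (S j)).
    witness (beta a1 b1 (fib_index cS (L + j))).
    repeat split; auto. rewrite !Hs by lia. rewrite Hf by (unfold M, fib_index; lia).
    simpl. lia. }
  witness (cantor K L). witness (cantor c0 (L + N)).
  split; auto. split; auto. split; [unfold M, fib_index; lia|].
  split; [unfold M, fib_index; lia|].
  witness (beta a1 b1 (fib_index K L)). witness (beta a2 b2 N).
  witness (beta a1 b1 (fib_index c0 (L + N))).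
  repeat split; auto. rewrite !Hf by (unfold M, fib_index; lia). rewrite Hs by lia. lia.
Qed.

Definition diag_graph (K cS c0 N u w : term) : formula := bto_formula (diag_bgraph K cS c0 N u w).

Definition diag_graph_generic : formula := bto_formula diag_bgraph_generic.

(** Terms that can be plugged into [diag_graph]: they avoid its bound
    variables [20..35] and the parameters [40..45] of [diag_graph_generic]. *)
Definition avoids_reserved (t : term) : Prop := forall k, 20 <= k <= 45 -> occurs_term k t = false.

Lemma avoids_reserved_numeral n : avoids_reserved (numeral n).
Proof. intros k _; apply closed_numeral. Qed.

Lemma avoids_reserved_var v : v < 20 \/ 45 < v -> avoids_reserved (tvar v).
Proof. intros H k Hk; simpl; apply Nat.eqb_neq; lia. Qed.

Lemma bwf_diag_bgraph K cS c0 N u w : avoids_reserved N -> avoids_reserved w ->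
  bwf (diag_bgraph K cS c0 N u w) = true.
Proof.
  intros HN Hw. cbn [diag_bgraph bwf odd_term occurs_term].
  rewrite !HN, !Hw by lia. reflexivity.
Qed.

Lemma diag_graph_subst v r K cS c0 N u w : 36 <= v ->
  subst v r (diag_graph K cS c0 N u w) =
  diag_graph (subst_term v r K) (subst_term v r cS) (subst_term v r c0)
             (subst_term v r N) (subst_term v r u) (subst_term v r w).
Proof.
  intros Hv. unfold diag_graph, diag_bgraph.
  cbn [bto_formula subst subst_term bex ball fand beta_formula pair_formula beta_modulus
       odd_term flt].
  eqb_simpl. reflexivity.
Qed.

Section DiagGraphParameters.
Variables p1 p2 p3 p4 p5 p6 : term.
Hypotheses (H1 : avoids_reserved p1) (H2 : avoids_reserved p2) (H3 : avoids_reserved p3)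
           (H4 : avoids_reserved p4) (H5 : avoids_reserved p5) (H6 : avoids_reserved p6).

Ltac params_avoid := first [apply H1 | apply H2 | apply H3 | apply H4 | apply H5 | apply H6]; lia.

Lemma diag_graph_as_subst : diag_graph p1 p2 p3 p4 p5 p6 =
  subst 40 p1 (subst 41 p2 (subst 42 p3 (subst 43 p4 (subst 44 p5 (subst 45 p6
    diag_graph_generic))))).
Proof.
  unfold diag_graph_generic, diag_bgraph_generic. fold (diag_graph (tvar 40) (tvar 41)
    (tvar 42) (tvar 43) (tvar 44) (tvar 45)).
  rewrite !diag_graph_subst by lia. cbn [subst_term Nat.eqb].
  repeat match goal with
  | |- context [subst_term ?i ?s ?a] => rewrite (subst_term_not_occurs i s a) by params_avoid
  end.
  reflexivity.
Qed.

Lemma sat_diag_graph e : sat e (diag_graph p1 p2 p3 p4 p5 p6) <->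
  bsat (update (update (update (update (update (update e
          40 (eval e p1)) 41 (eval e p2)) 42 (eval e p3)) 43 (eval e p4)) 44 (eval e p5))
          45 (eval e p6))
       diag_bgraph_generic.
Proof.
  assert (Hbound : forall v, In v (bound_vars diag_graph_generic) -> 20 <= v <= 35)
    by (vm_compute; intros v Hv; intuition lia).
  assert (Hff : forall p x X, avoids_reserved p ->
            bound_vars X = bound_vars diag_graph_generic -> free_for p x X = true).
  { intros p x X Hp HX. apply free_for_not_bound. intros v Hv Hin.
    rewrite HX in Hin. apply Hbound in Hin. rewrite Hp in Hv by lia. discriminate. }
  rewrite diag_graph_as_subst.
  rewrite !sat_subst by (apply Hff; [auto| rewrite ?bound_vars_subst; reflexivity]).
  repeat match goal with
  | |- context [eval (update ?e ?x ?a) ?t] =>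
      rewrite (eval_update_not_occurs e x a t) by params_avoid
  end.
  apply sat_bto_formula. vm_compute. reflexivity.
Qed.

Lemma free_in_diag_graph v : free_in v (diag_graph p1 p2 p3 p4 p5 p6) = true ->
  exists p, In p [p1; p2; p3; p4; p5; p6] /\ occurs_term v p = true.
Proof.
  assert (Hfree : forall v, In v (free_vars diag_graph_generic) -> 40 <= v <= 45)
    by (vm_compute; intros w Hw; intuition lia).
  rewrite diag_graph_as_subst. intros H.
  repeat match goal with
  | H : free_in v (subst _ ?p _) = true |- _ =>
      destruct (free_in_subst _ _ _ _ H) as [[? ?]|?]; clear H;
      [|exists p; simpl; tauto]
  end.
  apply free_in_free_vars, Hfree in H. lia.
Qed.

End DiagGraphParameters.

Lemma delta0_diag_graph K cS c0 N u w : avoids_reserved N -> avoids_reserved w ->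
  delta0 (diag_graph K cS c0 N u w).
Proof. intros HN Hw. apply delta0_bto_formula, bwf_diag_bgraph; auto. Qed.

(** * Representing the diagonal function *)

Section SymbolCodes.
Variables K cS c0 : nat.

Definition dgraph (a b c : term) : formula :=
  diag_graph (numeral K) (numeral cS) (numeral c0) a b c.

(** [b = d(a)], made provably functional by requiring that no other value
    has a [dgraph]-witness below the witness [v_97] of [b]. *)
Definition diag_unique_below (a b c : term) : formula :=
  fall 96 (fimp (fle (tvar 96) c) (fall 95 (fimp (fle (tvar 95) (tvar 96))
    (fimp (dgraph a (tvar 95) (tvar 96)) (feq (tvar 95) b))))).

Definition diag_repr (a b : term) : formula :=
  fex 97 (fand (dgraph a b (tvar 97)) (diag_unique_below a b (tvar 97))).

Lemma dgraph_subst v r a b c : 36 <= v ->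
  subst v r (dgraph a b c) = dgraph (subst_term v r a) (subst_term v r b) (subst_term v r c).
Proof. intros Hv. unfold dgraph. rewrite diag_graph_subst by auto. numeral_simpl. reflexivity. Qed.

Lemma diag_unique_below_subst v r a b c : 36 <= v -> v <> 95 -> v <> 96 ->
  subst v r (diag_unique_below a b c) =
  diag_unique_below (subst_term v r a) (subst_term v r b) (subst_term v r c).
Proof.
  intros Hv H95 H96. unfold diag_unique_below. cbn [subst subst_term]. eqb_simpl.
  rewrite dgraph_subst by auto. cbn [subst_term]. eqb_simpl. reflexivity.
Qed.

Lemma diag_repr_subst v r a b : 36 <= v -> v <> 95 -> v <> 96 -> v <> 97 ->
  subst v r (diag_repr a b) = diag_repr (subst_term v r a) (subst_term v r b).
Proof.
  intros Hv H95 H96 H97. unfold diag_repr, fex, fand. cbn [subst subst_term]. eqb_simpl.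
  rewrite dgraph_subst, diag_unique_below_subst by auto. cbn [subst_term]. eqb_simpl.
  reflexivity.
Qed.

Lemma free_in_dgraph v a b c : avoids_reserved a -> avoids_reserved b -> avoids_reserved c ->
  free_in v (dgraph a b c) = true ->
  occurs_term v a = true \/ occurs_term v b = true \/ occurs_term v c = true.
Proof.
  intros Ha Hb Hc H.
  apply free_in_diag_graph in H; auto using avoids_reserved_numeral.
  destruct H as [p [Hp Hv]].
  simpl in Hp. intuition (subst; rewrite ?closed_numeral in Hv; discriminate || auto).
Qed.

Lemma free_in_diag_unique_below v a b c : avoids_reserved a -> avoids_reserved b ->
  free_in v (diag_unique_below a b c) = true ->
  occurs_term v a = true \/ occurs_term v b = true \/ occurs_term v c = true.
Proof.
  intros Ha Hb H. unfold diag_unique_below in H. cbn [free_in occurs_term] in H.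
  destruct (Nat.eqb 96 v) eqn:E1; [discriminate|].
  apply orb_true_iff in H; destruct H as [H|H].
  - apply orb_true_iff in H; destruct H as [H|H]; [congruence|auto].
  - destruct (Nat.eqb 95 v) eqn:E2; [discriminate|].
    rewrite !orb_true_iff in H.
    destruct H as [[H|H]|[H|[H|H]]]; try (cbn [occurs_term] in H; congruence); auto.
    apply free_in_dgraph in H; auto; try (apply avoids_reserved_var; lia).
    cbn [occurs_term] in H. rewrite E1, E2 in H. intuition discriminate.
Qed.

Lemma free_in_diag_repr v a b : avoids_reserved a -> avoids_reserved b ->
  free_in v (diag_repr a b) = true -> occurs_term v a = true \/ occurs_term v b = true.
Proof.
  intros Ha Hb H. unfold diag_repr, fex, fand in H. cbn [free_in] in H.
  destruct (Nat.eqb 97 v) eqn:E; [discriminate|].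
  apply orb_true_iff in H; destruct H as [H|H].
  - apply free_in_dgraph in H; auto; [|apply avoids_reserved_var; lia].
    cbn [occurs_term] in H. rewrite E in H. intuition discriminate.
  - apply free_in_diag_unique_below in H; auto.
    cbn [occurs_term] in H. rewrite E in H. intuition discriminate.
Qed.

Lemma sentence_dgraph N u w : sentence (dgraph (numeral N) (numeral u) (numeral w)).
Proof.
  intros v. destruct (free_in v _) eqn:E; auto.
  apply free_in_dgraph in E; try apply avoids_reserved_numeral.
  rewrite !closed_numeral in E. intuition discriminate.
Qed.

Lemma sentence_diag_unique_below N u w :
  sentence (diag_unique_below (numeral N) (numeral u) (numeral w)).
Proof.
  intros v. destruct (free_in v _) eqn:E; auto.
  apply free_in_diag_unique_below in E; try apply avoids_reserved_numeral.
  rewrite !closed_numeral in E. intuition discriminate.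
Qed.

Lemma delta0_diag_unique_below N u w :
  delta0 (diag_unique_below (numeral N) (numeral u) (numeral w)).
Proof.
  apply D0ball; [apply closed_numeral|]. apply D0ball; [reflexivity|].
  apply D0imp; [|constructor].
  apply delta0_diag_graph; [apply avoids_reserved_numeral| apply avoids_reserved_var; lia].
Qed.

Lemma sat_dgraph_sound e a b c : avoids_reserved a -> avoids_reserved b -> avoids_reserved c ->
  sat e (dgraph a b c) -> eval e b <= eval e c /\ diag_rel K cS c0 (eval e a) (eval e b).
Proof.
  intros Ha Hb Hc H. unfold dgraph in H.
  rewrite sat_diag_graph in H by auto using avoids_reserved_numeral.
  apply diag_bgraph_sound in H. cbn [update Nat.eqb] in H. rewrite !eval_numeral in H. exact H.
Qed.

Lemma sat_dgraph_complete e N u :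
  diag_rel K cS c0 N u -> exists w, sat e (dgraph (numeral N) (numeral u) (numeral w)).
Proof.
  intros H. destruct (diag_bgraph_complete _ _ _ _ _ H) as [w Hw]. exists w.
  unfold dgraph. rewrite sat_diag_graph by auto using avoids_reserved_numeral.
  apply Hw; cbn [update Nat.eqb]; apply eval_numeral.
Qed.

Lemma sat_diag_unique_below e N m w : diag_rel K cS c0 N m ->
  sat e (diag_unique_below (numeral N) (numeral m) (numeral w)).
Proof.
  intros Hm. unfold diag_unique_below. cbn [sat]. intros w' _ u' _ Hd.
  apply sat_dgraph_sound in Hd; try apply avoids_reserved_numeral;
    try (apply avoids_reserved_var; lia).
  destruct Hd as [_ Hd]. rewrite eval_numeral in Hd. cbn [eval] in *.
  rewrite eval_numeral. rewrite update_eq in *. exact (diag_rel_functional _ _ _ _ _ _ Hd Hm).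
Qed.

End SymbolCodes.

(** Terms that may be substituted for [v_95] or [v_96] in [diag_unique_below]. *)
Definition instance_term (s : term) : Prop :=
  closed_term s \/ exists y, s = tvar y /\ 36 <= y /\ y <> 95.

Lemma free_for_instance_term s x f : instance_term s ->
  (forall v, In v (bound_vars f) -> v = 95 \/ v <= 35) -> free_for s x f = true.
Proof.
  intros [Hs|[y [-> [Hy1 Hy2]]]] Hf; [apply free_for_closed; auto|].
  apply free_for_not_bound. intros v Hv Hin. simpl in Hv. apply Nat.eqb_eq in Hv; subst.
  destruct (Hf _ Hin); lia.
Qed.

Lemma instance_term_var y : 36 <= y -> y <> 95 -> instance_term (tvar y).
Proof. intros; right; exists y; auto. Qed.

Section Representation.
Variable T : formula -> Prop.
Hypothesis HB : forall f, IDelta0_axiom f -> provable T f.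
Variables K cS c0 N m : nat.
Hypothesis Hm : diag_rel K cS c0 N m.

Local Notation D := (dgraph K cS c0).
Local Notation U := (diag_unique_below K cS c0).

Lemma diag_witness : exists w, m <= w /\
  provable T (D (numeral N) (numeral m) (numeral w)) /\
  provable T (U (numeral N) (numeral m) (numeral w)).
Proof.
  destruct (sat_dgraph_complete K cS c0 zero_env N m Hm) as [w Hw].
  exists w. split; [|split].
  - apply sat_dgraph_sound in Hw; try apply avoids_reserved_numeral.
    rewrite !eval_numeral in Hw. tauto.
  - apply (delta0_complete T HB); [| apply sentence_dgraph| exact Hw].
    apply delta0_diag_graph; apply avoids_reserved_numeral.
  - apply (delta0_complete T HB); [apply delta0_diag_unique_below
      | apply sentence_diag_unique_below| apply sat_diag_unique_below, Hm].
Qed.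

Lemma dgraph_le a b c : provable T (fimp (D a b c) (fle b c)).
Proof. unfold dgraph, diag_graph, diag_bgraph. cbn [bto_formula]. taut. Qed.

Lemma diag_unique_below_inst a b c s : instance_term s ->
  occurs_term 96 a = false -> occurs_term 96 b = false -> occurs_term 96 c = false ->
  provable T (fimp (U a b c) (fimp (fle s c) (fall 95 (fimp (fle (tvar 95) s)
     (fimp (D a (tvar 95) s) (feq (tvar 95) b)))))).
Proof.
  intros Hs Ha Hb Hc. unfold diag_unique_below.
  match goal with |- provable _ (fimp (fall 96 ?X) _) =>
    assert (Hf : free_for s 96 X = true) end.
  { apply free_for_instance_term; auto. intros v Hv. simpl in Hv. intuition lia. }
  assert (H := PAx T _ (LA4 96 s _ Hf)).
  revert H. cbn [subst subst_term Nat.eqb]. rewrite dgraph_subst by lia.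
  cbn [subst_term Nat.eqb]. rewrite !subst_term_not_occurs by auto. auto.
Qed.

Lemma diag_value_inst a b t s : instance_term s ->
  occurs_term 95 a = false -> occurs_term 95 b = false -> occurs_term 95 t = false ->
  provable T (fimp (fall 95 (fimp (fle (tvar 95) t) (fimp (D a (tvar 95) t) (feq (tvar 95) b))))
                   (fimp (fle s t) (fimp (D a s t) (feq s b)))).
Proof.
  intros Hs Ha Hb Ht.
  match goal with |- provable _ (fimp (fall 95 ?X) _) =>
    assert (Hf : free_for s 95 X = true) end.
  { apply free_for_instance_term; auto. intros v Hv. simpl in Hv. intuition lia. }
  assert (H := PAx T _ (LA4 95 s _ Hf)).
  revert H. cbn [subst subst_term Nat.eqb]. rewrite dgraph_subst by lia.
  cbn [subst_term Nat.eqb]. rewrite !subst_term_not_occurs by auto. auto.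
Qed.

(** Given witnesses [w] for [m] and [v_97] for [v_y], compare [v_97] with [w]:
    whichever is smaller lies below the other's uniqueness bound. *)
Lemma diag_repr_functional y : 100 <= y ->
  provable T (fimp (diag_repr K cS c0 (numeral N) (tvar y)) (feq (tvar y) (numeral m))).
Proof.
  intros Hy. destruct diag_witness as [w [Hmw [HD HU]]].
  unfold diag_repr. apply ex_elim.
  { cbn [free_in occurs_term]. rewrite closed_numeral. eqb_simpl. reflexivity. }
  assert (Q := le_numeral_total_var T HB 97 w).
  assert (A1 := diag_unique_below_inst (numeral N) (tvar y) (tvar 97) (numeral w)
                  (or_introl (closed_numeral w)) (closed_numeral _ _)
                  ltac:(simpl; eqb_simpl; auto) eq_refl).
  assert (A2 := diag_value_inst (numeral N) (tvar y) (numeral w) (numeral m)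
                  (or_introl (closed_numeral m)) (closed_numeral _ _)
                  ltac:(simpl; eqb_simpl; auto) (closed_numeral _ _)).
  assert (A3 := numerals_le T HB m w Hmw).
  assert (A4 := provable_eq_sym T (numeral m) (tvar y)).
  assert (B1 := diag_unique_below_inst (numeral N) (numeral m) (numeral w) (tvar 97)
                  (instance_term_var 97 ltac:(lia) ltac:(lia))
                  (closed_numeral _ _) (closed_numeral _ _) (closed_numeral _ _)).
  assert (B2 := diag_value_inst (numeral N) (numeral m) (tvar 97) (tvar y)
                  (instance_term_var y ltac:(lia) ltac:(lia))
                  (closed_numeral _ _) (closed_numeral _ _) eq_refl).
  assert (B3 := dgraph_le (numeral N) (tvar y) (tvar 97)).
  taut using (Q, A1, A2, A3, HD, A4, PMP _ _ _ HU B1, B2, B3).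
Qed.

Lemma diag_repr_total y : 100 <= y ->
  provable T (fimp (feq (tvar y) (numeral m)) (diag_repr K cS c0 (numeral N) (tvar y))).
Proof.
  intros Hy. destruct diag_witness as [w [Hmw [HD HU]]].
  assert (H1 := ex_intro T 97 (numeral w)
                  (fand (D (numeral N) (numeral m) (tvar 97)) (U (numeral N) (numeral m) (tvar 97)))
                  (free_for_closed _ _ _ (closed_numeral w))).
  revert H1. cbn [subst fand]. rewrite dgraph_subst, diag_unique_below_subst by lia.
  cbn [subst_term Nat.eqb]. numeral_simpl. intros H1.
  assert (H2 := leibniz T y (numeral m) (diag_repr K cS c0 (numeral N) (tvar y)) (closed_numeral m)).
  rewrite diag_repr_subst in H2 by lia. cbn [subst_term] in H2. rewrite Nat.eqb_refl in H2.
  rewrite (subst_term_not_occurs y _ (numeral N)) in H2 by apply closed_numeral.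
  unfold diag_repr in *. taut using (HD, HU, H1, H2).
Qed.

End Representation.

(** * Codes of strings ending in a numeral *)

Lemma seqZ_from_app i l1 l2 :
  seqZ_from i (l1 ++ l2) = seqZ_from i l1 + seqZ_from (i + length l1) l2.
Proof.
  revert i; induction l1; intros i; simpl; [rewrite Nat.add_0_r; auto|].
  rewrite IHl1. replace (S i + length l1) with (i + S (length l1)) by lia. lia.
Qed.

Lemma succ_block_code_shift cS N : forall p,
  succ_block_code cS p (S N) = fibZ (fib_index cS p) + succ_block_code cS (S p) N.
Proof.
  induction N; intros p.
  - cbn [succ_block_code]. rewrite Nat.add_0_r. lia.
  - change (succ_block_code cS p (S (S N)))
      with (succ_block_code cS p (S N) + fibZ (fib_index cS (p + S N))).
    change (succ_block_code cS (S p) (S N))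
      with (succ_block_code cS (S p) N + fibZ (fib_index cS (S p + N))).
    rewrite IHN. replace (p + S N) with (S p + N) by lia. lia.
Qed.

Lemma seqZ_from_numeral (c : symbol -> nat) N : forall p,
  seqZ_from p (map c (term_syms (numeral N))) =
  succ_block_code (c SSucc) p N + fibZ (fib_index (c SZero) (p + N)).
Proof.
  induction N; intros p; cbn [numeral term_syms map seqZ_from].
  - cbn [succ_block_code]. replace (2 * cantor (c SZero) p + 1) with (fib_index (c SZero) (p + 0))
      by (unfold fib_index; rewrite Nat.add_0_r; lia). lia.
  - rewrite IHN, succ_block_code_shift. replace (S p + N) with (p + S N) by lia.
    replace (2 * cantor (c SSucc) p + 1) with (fib_index (c SSucc) p)
      by (unfold fib_index; lia). lia.
Qed.

(** [d] maps [N = (n + L)^2 + L], with [n] the code of [P v_0] and [L] the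
    position of that [v_0], to the code of [P N]. *)
Lemma diag_rel_seqZ (c : symbol -> nat) (P : list symbol) :
  let n := seqZ (map c (P ++ [SVar 0])) in
  let L := length P + 1 in
  let N := (n + L) * (n + L) + L in
  diag_rel (c (SVar 0)) (c SSucc) (c SZero) N (seqZ (map c (P ++ term_syms (numeral N)))).
Proof.
  intros n L N. exists n, L. split; [reflexivity|].
  unfold n, seqZ. rewrite !map_app, !seqZ_from_app, length_map, seqZ_from_numeral.
  cbn [map seqZ_from]. rewrite (Nat.add_comm 1 (length P)). fold L.
  replace (2 * cantor (c (SVar 0)) L + 1) with (fib_index (c (SVar 0)) L)
    by (unfold fib_index; lia).
  lia.
Qed.

(** * The fixed point *)

Section FixedPointLogic.
Variable T : formula -> Prop.

Lemma all_neg_imp_neq_numeral_iff R z N :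
  provable T (fiff (fall z (fimp (fneg R) (fneg (feq (tvar z) (numeral N)))))
                   (subst z (numeral N) R)).
Proof.
  assert (H1 := PAx T _ (LA4 z (numeral N) (fimp (fneg R) (fneg (feq (tvar z) (numeral N))))
                          (free_for_closed _ _ _ (closed_numeral N)))).
  revert H1. cbn [subst subst_term]. rewrite Nat.eqb_refl. numeral_simpl. intros H1.
  assert (H2 := leibniz T z (numeral N) R (closed_numeral N)).
  assert (H3 : provable T (fimp (subst z (numeral N) R)
                 (fall z (fimp (fneg R) (fneg (feq (tvar z) (numeral N))))))).
  { apply all_intro; [|taut using H2].
    destruct (free_in z (subst z (numeral N) R)) eqn:E; auto.
    destruct (free_in_subst _ _ _ _ E) as [[_ H]|H]; [congruence|].
    rewrite closed_numeral in H; discriminate. }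
  taut using (H1, provable_eq_refl T (numeral N), H3).
Qed.

Lemma all_eq_var_imp_iff R x y m : y <> x ->
  provable T (fiff R (feq (tvar y) (numeral m))) ->
  provable T (fiff (fall y (fimp (feq (tvar y) (tvar x)) R)) (feq (tvar x) (numeral m))).
Proof.
  intros Hxy HR.
  assert (H1 : provable T (fimp (fimp (feq (tvar y) (tvar x)) R)
                                (fimp (feq (tvar y) (tvar x)) (feq (tvar y) (numeral m)))))
    by taut using HR.
  apply (all_mono T y) in H1.
  assert (H2 := PAx T _ (LA4 y (tvar x) (fimp (feq (tvar y) (tvar x)) (feq (tvar y) (numeral m)))
                          eq_refl)).
  revert H2. cbn [subst subst_term]. rewrite Nat.eqb_refl, (proj2 (Nat.eqb_neq x y)) by auto.
  numeral_simpl. intros H2.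
  assert (H4 : provable T (fimp (feq (tvar x) (numeral m)) (fall y (fimp (feq (tvar y) (tvar x)) R)))).
  { apply all_intro.
    - cbn [free_in occurs_term]. rewrite closed_numeral, (proj2 (Nat.eqb_neq x y)) by auto.
      reflexivity.
    - taut using (provable_eq_trans T (tvar y) (tvar x) (numeral m), HR). }
  taut using (H1, H2, provable_eq_refl T (tvar x), H4).
Qed.

Lemma ex_and_eq_numeral_iff phi x m :
  provable T (fiff (fex x (fand phi (feq (tvar x) (numeral m)))) (subst x (numeral m) phi)).
Proof.
  assert (H1 := leibniz T x (numeral m) phi (closed_numeral m)).
  assert (H2 : provable T (fimp (fex x (fand phi (feq (tvar x) (numeral m))))
                                (subst x (numeral m) phi))).
  { apply ex_elim; [|taut using H1].
    destruct (free_in x (subst x (numeral m) phi)) eqn:E; auto.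
    destruct (free_in_subst _ _ _ _ E) as [[_ H]|H]; [congruence|].
    rewrite closed_numeral in H; discriminate. }
  assert (H3 := ex_intro T x (numeral m) (fand phi (feq (tvar x) (numeral m)))
                  (free_for_closed _ _ _ (closed_numeral m))).
  revert H3. cbn [subst fand subst_term]. rewrite Nat.eqb_refl. numeral_simpl. intros H3.
  taut using (H2, H3, provable_eq_refl T (numeral m)).
Qed.

End FixedPointLogic.

(** [theta(h) = exists x (phi /\ forall y (y = x -> forall z (~ D(z, y) -> ~ h)))]
    with [y = v_(100+x)], [z = v_(101+x)], clear of all reserved variables. *)
Definition fixpoint_template (phi : formula) (x K cS c0 : nat) (h : formula) : formula :=
  fex x (fand phi (fall (100 + x) (fimp (feq (tvar (100 + x)) (tvar x))
    (fall (101 + x) (fimp (fneg (diag_repr K cS c0 (tvar (101 + x)) (tvar (100 + x))))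
                          (fneg h)))))).

Definition template_prefix (phi : formula) (x K cS c0 : nat) : list symbol :=
  [SNeg; SAll; SVar x; SNeg; SNeg; SImp] ++ formula_syms phi ++
  [SNeg; SAll; SVar (100 + x); SImp; SEq; SVar (100 + x); SVar x; SAll; SVar (101 + x);
   SImp; SNeg] ++
  formula_syms (diag_repr K cS c0 (tvar (101 + x)) (tvar (100 + x))) ++
  [SNeg; SEq; SVar (101 + x)].

Lemma formula_syms_template phi x K cS c0 t :
  formula_syms (fixpoint_template phi x K cS c0 (feq (tvar (101 + x)) t)) =
  template_prefix phi x K cS c0 ++ term_syms t.
Proof.
  unfold fixpoint_template, template_prefix, fex, fand.
  cbn [formula_syms term_syms]. rewrite <- !app_assoc. reflexivity.
Qed.

Lemma sentence_fixpoint_template phi x K cS c0 N :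
  (forall y, free_in y phi = true -> y = x) ->
  sentence (fixpoint_template phi x K cS c0 (feq (tvar (101 + x)) (numeral N))).
Proof.
  intros Hphi v. unfold fixpoint_template, fex, fand. cbn [free_in occurs_term].
  rewrite closed_numeral.
  assert (HD : free_in v (diag_repr K cS c0 (tvar (101 + x)) (tvar (100 + x))) = true ->
               v = 101 + x \/ v = 100 + x).
  { intro E. apply free_in_diag_repr in E; try (apply avoids_reserved_var; lia).
    cbn [occurs_term] in E. destruct E as [E|E]; apply Nat.eqb_eq in E; auto. }
  destruct (Nat.eqb_spec x v); [reflexivity|].
  destruct (free_in v phi) eqn:Ef; [apply Hphi in Ef; congruence|].
  destruct (Nat.eqb_spec (100 + x) v); [reflexivity|].
  destruct (Nat.eqb_spec (101 + x) v); [reflexivity|].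
  destruct (free_in v (diag_repr K cS c0 (tvar (101 + x)) (tvar (100 + x)))) eqn:ED;
    [destruct (HD eq_refl); lia|].
  reflexivity.
Qed.

Lemma fixpoint_template_iff T (HB : forall f, IDelta0_axiom f -> provable T f)
  phi x K cS c0 N m : diag_rel K cS c0 N m ->
  provable T (fiff (fixpoint_template phi x K cS c0 (feq (tvar (101 + x)) (numeral N)))
                   (subst x (numeral m) phi)).
Proof.
  intros Hm. set (y := 100 + x). set (z := 101 + x).
  set (R := fall z (fimp (fneg (diag_repr K cS c0 (tvar z) (tvar y)))
                         (fneg (feq (tvar z) (numeral N))))).
  assert (HR : provable T (fiff R (feq (tvar y) (numeral m)))).
  { assert (H1 := all_neg_imp_neq_numeral_iff T (diag_repr K cS c0 (tvar z) (tvar y)) z N).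
    rewrite diag_repr_subst in H1 by (unfold z; lia). cbn [subst_term] in H1.
    rewrite Nat.eqb_refl, (proj2 (Nat.eqb_neq y z)) in H1 by (unfold y, z; lia).
    assert (H2 := diag_repr_functional T HB K cS c0 N m Hm y ltac:(unfold y; lia)).
    assert (H3 := diag_repr_total T HB K cS c0 N m Hm y ltac:(unfold y; lia)).
    fold R in H1. taut using (H1, H2, H3). }
  assert (H4 := all_eq_var_imp_iff T R x y m ltac:(unfold y; lia) HR).
  assert (H5 : provable T (fiff (fand phi (fall y (fimp (feq (tvar y) (tvar x)) R)))
                                (fand phi (feq (tvar x) (numeral m))))) by taut using H4.
  apply (ex_iff T x) in H5.
  unfold fixpoint_template. fold y z R.
  taut using (H5, ex_and_eq_numeral_iff T phi x m).
Qed.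

Theorem lemma6p1 (c : symbol -> nat) (Hc : admissible_code c)
  (T : formula -> Prop) (HTsent : forall f, T f -> sentence f)
  (HText : extends_IDelta0_Omega1 T) (Hcons : consistent T)
  (phi : formula) (x : nat)
  (Hphi : forall y, free_in y phi = true -> y = x) :
  exists psi : formula, sentence psi /\
    provable T (fiff psi (subst x (numeral (code c psi)) phi)).
Proof.
  destruct HText as [HB _].
  set (K := c (SVar 0)). set (cS := c SSucc). set (c0 := c SZero).
  set (P := template_prefix phi x K cS c0).
  set (n := seqZ (map c (P ++ [SVar 0]))).
  set (N := (n + (length P + 1)) * (n + (length P + 1)) + (length P + 1)).
  set (psi := fixpoint_template phi x K cS c0 (feq (tvar (101 + x)) (numeral N))).
  assert (Hcode : code c psi = seqZ (map c (P ++ term_syms (numeral N))))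
    by (unfold code, psi; rewrite formula_syms_template; reflexivity).
  exists psi. split; [apply sentence_fixpoint_template, Hphi|].
  rewrite Hcode. apply fixpoint_template_iff; [exact HB|]. apply diag_rel_seqZ.
Qed.
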